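(* In the setting below, assume $\varphi(U)$ is an open box $\prod_{i=1}^n(-r_i,r_i)$. Then: (i) there exists a smooth $\hat h$ on $\varphi(U)$ satisfying $\frac{\partial\hat h}{\partial q^\mu}=u_\mu$ for all $\mu=1,\dots,n-m$ if and only if $\frac{\partial u_\nu}{\partial q^\mu}=\frac{\partial u_\mu}{\partial q^\nu}$ on $\varphi(U)$ for all $\mu,\nu\le n-m$ (equivalently, in coordinate-free terms, $\mathrm d\big(\mathrm dh\circ\mathbb F(\mathfrak K\circ\hat{\mathfrak p})\circ(\mathbb F\mathfrak H)^{-1}\big)(\mathsf u,\mathsf v)=0$ for all $\mathsf u,\mathsf v\in\mathbb F\mathfrak H(\hat W)$); (ii) in that case, for every constant $\varpi$, the function $$\hat h(q^1,\dots,q^n)=\sum_{\mu=1}^{n-m}\int_0^{q^\mu}u_\mu(0,\dots,0,t,q^{\mu+1},\dots,q^n)\,\mathrm dt+\frac{\varpi}{2}\sum_{a=1}^m(q^{n-m+a})^2$$ (with $t$ in the $\mu$-th slot) is such a solution; (iii) a solution $\hat h$ having $\mathbf 0$ as a critical point with positive-definite Hessian exists if and only if the matrix $\mathbb M_{\mu\nu}:=\frac{\partial u_\nu}{\partial q^\mu}(\mathbf 0)=\frac{\partial^2h}{\partial q^\mu\partial q^k}(\mathbf 0)\hat{\mathbb P}^{k\tau}(\mathbf 0)\mathbb K_{\tau\nu}(\mathbf 0)$ is positive-definite; and when $\mathbb M$ is positive-definite with least eigenvalue $\lambda_{\min}$, the function in (ii) has this property as soon as $$\varpi>\frac{1}{\lambda_{\min}}\sum_{\mu=1}^{n-m}\sum_{a=1}^m\Big(\frac{\partial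 u_\mu}{\partial q^{n-m+a}}(\mathbf 0)\Big)^2.$$
   Context: Setting: $\mathfrak H$ is a quadratic form on $T^*Q$ ($Q$ a smooth $n$-manifold), i.e. $\mathfrak H(\alpha)=\tfrac12\langle\alpha,\rho^\sharp(\alpha)\rangle$ for a smooth positive-definite fibered inner product $\rho$ on $TQ$; $\mathbb F\mathfrak H=\rho^\sharp:T^*Q\to TQ$ is its fiber derivative ($\langle\beta,\mathbb Ff(\alpha)\rangle=\frac{d}{dt}f(\alpha+t\beta)|_{t=0}$ for smooth $f$ on $T^*Q$). $h:Q\to\mathbb R$ is smooth, $W\subseteq T^*Q$ is a subbundle of rank $m$, $1\le m<n$. $q_0$ is a critical point of $h$ and $(U,\varphi=(q^1,\dots,q^n))$ is a chart with $\varphi(q_0)=\mathbf 0$ such that $\hat W:=(\mathbb F\mathfrak H)^{-1}(\mathrm{span}\{\partial/\partial q^1,\dots,\partial/\partial q^{n-m}\})$ is a complement of $W$ on $U$, with $\hat{\mathfrak p}$ the projection onto $\hat W$ along $W$. $\mathfrak K$ is a quadratic form on $\hat W$ (in applications a solution of the kinetic equation $\{\mathfrak K\circ\hat{\mathfrak p},\mathfrak H\}|_{\hat W}=0$, $\{\cdot,\cdot\}$ the canonical Poisson bracket). The equation $\partial\hat h/\partial q^\mu=u_\mu$ is the local form of the potential matching equation $\big(\mathrm d\hat h\circ\mathbb F\mathfrak H-\mathrm dh\circ\mathbb F(\mathfrak K\circ\hat{\mathfrak p})\big)(\sigma)=0$ for all $\sigma\in\hat W$. Indices: $k\in\{1,\dots,n\}$,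 Greek indices in $\{1,\dots,n-m\}$, $a\in\{1,\dots,m\}$, summation over repeated indices. $\mathbb H_{ij}:=\langle(\mathbb F\mathfrak H)^{-1}(\partial/\partial q^i),\partial/\partial q^j\rangle$; $\sigma_\mu:=\mathbb H_{\mu k}\mathrm dq^k$ is a basis of $\hat W$; $\hat{\mathbb P}^{k\mu}$ is defined by $\hat{\mathfrak p}(\mathrm dq^k)=\hat{\mathbb P}^{k\mu}\sigma_\mu$; $\mathbb K_{\mu\nu}$ is defined by $\mathfrak K(a^\mu\sigma_\mu)=\tfrac12\mathbb K_{\mu\nu}a^\mu a^\nu$. Functions on $U$ are identified with their local representatives, and $u_\mu:=\frac{\partial h}{\partial q^k}\hat{\mathbb P}^{k\tau}\mathbb K_{\tau\mu}$. *)

From Stdlib Require Import Reals Lra Lia ClassicalEpsilon.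
Open Scope R_scope.

(* Points of R^n are encoded as functions nat -> R whose coordinates of
   index >= n vanish; coordinates are 0-based (q^{i+1} of the paper is x i). *)
Definition point := nat -> R.

Definition zero_pt : point := fun _ => 0.

Fixpoint sum_to (k : nat) (f : nat -> R) : R :=
  match k with
  | O => 0
  | S k' => sum_to k' f + f k'
  end.

Definition box (n : nat) (r : nat -> R) (x : point) : Prop :=
  (forall i, (i < n)%nat -> - r i < x i < r i) /\
  (forall i, (n <= i)%nat -> x i = 0).

Definition upd (x : point) (i : nat) (t : R) : point :=
  fun j => if Nat.eqb j i then t else x j.

Definition has_partial (f : point -> R) (i : nat) (x : point) (l : R) : Prop :=
  derivable_pt_lim (fun t => f (upd x i t)) (x i) l.

Definition pd (f : point -> R) (i : nat) : point -> R :=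
  fun x => epsilon (inhabits 0) (fun l => has_partial f i x l).

Fixpoint iter_pd (is : list nat) (f : point -> R) : point -> R :=
  match is with
  | nil => f
  | cons i is' => pd (iter_pd is' f) i
  end.

Definition continuous_on (n : nat) (D : point -> Prop) (f : point -> R) : Prop :=
  forall x, D x -> forall eps, 0 < eps -> exists delta, 0 < delta /\
    forall y, D y -> (forall i, (i < n)%nat -> Rabs (y i - x i) < delta) ->
      Rabs (f y - f x) < eps.

Definition smooth_on (n : nat) (D : point -> Prop) (f : point -> R) : Prop :=
  forall is : list nat, List.Forall (fun i => (i < n)%nat) is ->
    continuous_on n D (iter_pd is f) /\
    forall i, (i < n)%nat -> forall x, D x ->
      has_partial (iter_pd is f) i x (pd (iter_pd is f) i x).

(* Riemann integral of f over [a,b] (independent of the integrability proof) *)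
Definition integral (f : R -> R) (a b : R) : R :=
  epsilon (inhabits 0)
    (fun I => exists pr : Riemann_integrable f a b, RiemannInt pr = I).

(* k x k matrices as nat -> nat -> R *)
Definition posdef (k : nat) (M : nat -> nat -> R) : Prop :=
  (forall i j, (i < k)%nat -> (j < k)%nat -> M i j = M j i) /\
  forall v : nat -> R, (exists i, (i < k)%nat /\ v i <> 0) ->
    0 < sum_to k (fun i => sum_to k (fun j => v i * M i j * v j)).

Definition eigenvalue (k : nat) (M : nat -> nat -> R) (lam : R) : Prop :=
  exists v : nat -> R, (exists i, (i < k)%nat /\ v i <> 0) /\
    forall i, (i < k)%nat -> sum_to k (fun j => M i j * v j) = lam * v i.

Definition least_eigenvalue (k : nat) (M : nat -> nat -> R) (lam : R) : Prop :=
  eigenvalue k M lam /\ forall mu, eigenvalue k M mu -> lam <= mu.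

(* u_mu = dh/dq^k  P^{k tau} K_{tau mu}  (0-based: k < n, tau < n-m) *)
Definition u_fun (n m : nat) (h : point -> R) (P K : nat -> nat -> point -> R)
    (mu : nat) : point -> R :=
  fun x => sum_to n (fun k => sum_to (n - m) (fun tau =>
             pd h k x * P k tau x * K tau mu x)).

Definition is_solution (n m : nat) (r : nat -> R) (u : nat -> point -> R)
    (hh : point -> R) : Prop :=
  smooth_on n (box n r) hh /\
  forall x, box n r x -> forall mu, (mu < n - m)%nat -> pd hh mu x = u mu x.

Definition integrable_cond (n m : nat) (r : nat -> R) (u : nat -> point -> R) : Prop :=
  forall x, box n r x -> forall mu nu, (mu < n - m)%nat -> (nu < n - m)%nat ->
    pd (u nu) mu x = pd (u mu) nu x.

Definition slot_pt (q : point) (mu : nat) (t : R) : point :=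
  fun j => if Nat.ltb j mu then 0 else if Nat.eqb j mu then t else q j.

Definition hhat_formula (n m : nat) (u : nat -> point -> R) (varpi : R) : point -> R :=
  fun q => sum_to (n - m) (fun mu => integral (fun t => u mu (slot_pt q mu t)) 0 (q mu))
           + varpi / 2 * sum_to m (fun a => (q (n - m + a)%nat) ^ 2).

Definition hessian (hh : point -> R) (x : point) : nat -> nat -> R :=
  fun i j => pd (pd hh j) i x.

Definition critical_posdef (n : nat) (hh : point -> R) (x : point) : Prop :=
  (forall i, (i < n)%nat -> pd hh i x = 0) /\ posdef n (hessian hh x).

(* If [hh] solves the matching equation, then [u_mu = d hh / d q^mu], so by Schwarz's theorem
   the Jacobian [d u_nu / d q^mu] must be symmetric.  Conversely, the mu-th summand of (ii)
   integrates [u_mu] along the segment joining the point with its first [mu + 1] coordinates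
   zeroed to the point with only its first [mu] coordinates zeroed; differentiating it under the
   integral sign and using the symmetry, the derivatives of the summands in the direction
   [q^mu] telescope to [u_mu].
   At [0] the Hessian of (ii) is the block matrix [[M, B], [B^T, varpi I]] with
   [B mu a = d u_mu / d q^(n-m+a)], and the leading block of the Hessian of any solution is [M].
   Hence [M] must be positive definite; conversely, if [c |x|^2 <= x^T M x], the cross term
   [2 x^T B y] is dominated as soon as [varpi > |B|^2 / c], and the least eigenvalue of [M] is
   such a [c]. *)

From Pilot Require Import Defs.
From Stdlib Require Import Reals Lra Lia ClassicalEpsilon FunctionalExtensionality PropExtensionality List.
From Coquelicot Require Import Coquelicot.
Open Scope R_scope.

(** * Coordinate updates and partial derivatives *)

Lemma upd_same x i : upd x i (x i) = x.
Proof.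
  apply functional_extensionality; intro j; unfold upd.
  destruct (Nat.eqb_spec j i); subst; auto.
Qed.

Lemma upd_upd x i s t : upd (upd x i s) i t = upd x i t.
Proof.
  apply functional_extensionality; intro j; unfold upd.
  destruct (Nat.eqb_spec j i); auto.
Qed.

Lemma upd_eq x i t : upd x i t i = t.
Proof. unfold upd. now rewrite Nat.eqb_refl. Qed.

Lemma upd_neq x i t j : j <> i -> upd x i t j = x j.
Proof. intro H. unfold upd. destruct (Nat.eqb_spec j i); auto; contradiction. Qed.

Lemma upd_comm x i j s t : i <> j -> upd (upd x i s) j t = upd (upd x j t) i s.
Proof.
  intro H. apply functional_extensionality; intro k; unfold upd.
  destruct (Nat.eqb_spec k j); destruct (Nat.eqb_spec k i); subst; auto; contradiction.
Qed.

Lemma has_partial_is_derive f i x l :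
  has_partial f i x l <-> is_derive (fun t => f (upd x i t)) (x i) l.
Proof. unfold has_partial. rewrite is_derive_Reals. tauto. Qed.

Lemma pd_unique f i x l : has_partial f i x l -> pd f i x = l.
Proof.
  intro H. unfold pd.
  assert (E : exists l, has_partial f i x l) by (exists l; exact H).
  eapply uniqueness_limite; [apply (epsilon_spec (inhabits 0) _ E)|exact H].
Qed.

Lemma pd_ext f g i j x y :
  (forall l, has_partial f i x l <-> has_partial g j y l) -> pd f i x = pd g j y.
Proof.
  intro H. unfold pd. f_equal. apply functional_extensionality. intro l.
  apply propositional_extensionality. apply H.
Qed.

Lemma has_partial_const c i x : has_partial (fun _ => c) i x 0.
Proof. rewrite has_partial_is_derive. exact (is_derive_const (K:=R_AbsRing) c (x i)). Qed.

Lemma pd_const c i : pd (fun _ => c) i = fun _ => 0.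
Proof. apply functional_extensionality; intro x. apply pd_unique, has_partial_const. Qed.

Lemma has_partial_plus f g i x a b : has_partial f i x a -> has_partial g i x b ->
  has_partial (fun y => f y + g y) i x (a + b).
Proof. rewrite !has_partial_is_derive. intros Hf Hg. exact (is_derive_plus _ _ _ _ _ Hf Hg). Qed.

Lemma has_partial_mult f g i x a b : has_partial f i x a -> has_partial g i x b ->
  has_partial (fun y => f y * g y) i x (a * g x + f x * b).
Proof.
  rewrite !has_partial_is_derive. intros Hf Hg.
  pose proof (is_derive_mult (K:=R_AbsRing) _ _ _ _ _ Hf Hg Rmult_comm) as H.
  simpl in H. now rewrite upd_same in H.
Qed.

Lemma has_partial_coord j i x : has_partial (fun y => y j) i x (if Nat.eqb j i then 1 else 0).
Proof.
  rewrite has_partial_is_derive. unfold upd. destruct (Nat.eqb j i).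
  - exact (is_derive_id (K:=R_AbsRing) (x i)).
  - exact (is_derive_const (K:=R_AbsRing) (x j) (x i)).
Qed.

Lemma pd_coord j i : pd (fun y => y j) i = fun _ => if Nat.eqb j i then 1 else 0.
Proof. apply functional_extensionality; intro x. apply pd_unique, has_partial_coord. Qed.

Lemma has_partial_sum N F i x l : (forall a, (a < N)%nat -> has_partial (F a) i x (l a)) ->
  has_partial (fun y => sum_to N (fun a => F a y)) i x (sum_to N l).
Proof.
  induction N; intros H; simpl.
  - apply has_partial_const.
  - apply has_partial_plus; [apply IHN; intros|]; apply H; lia.
Qed.

Lemma locally_of_radius (a : R) (P : R -> Prop) :
  (exists d, 0 < d /\ forall t, Rabs (t - a) < d -> P t) -> locally a P.
Proof. intros [d [Hd H]]. exists (mkposreal d Hd). intros y Hy. now apply H. Qed.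

Fixpoint min_to (k : nat) (g : nat -> R) : R :=
  match k with O => 1 | S k' => Rmin (min_to k' g) (g k') end.

Lemma min_to_pos k g : (forall i, (i < k)%nat -> 0 < g i) -> 0 < min_to k g.
Proof.
  induction k; simpl; intros H; [lra|].
  apply Rmin_glb_lt; [apply IHk; intros|]; apply H; lia.
Qed.

Lemma min_to_le k g i : (i < k)%nat -> min_to k g <= g i.
Proof.
  induction k; simpl; intros H; [lia|].
  destruct (Nat.eq_dec i k) as [->|]; [apply Rmin_r|].
  eapply Rle_trans; [apply Rmin_l|apply IHk; lia].
Qed.

Definition close (n : nat) (x y : point) (d : R) : Prop :=
  forall i, (i < n)%nat -> Rabs (y i - x i) < d.

Lemma box_radius_pos n r x i : box n r x -> (i < n)%nat -> 0 < r i.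
Proof. intros [H _] Hi. specialize (H i Hi). lra. Qed.

Lemma box_zero n r : (forall i, (i < n)%nat -> 0 < r i) -> box n r zero_pt.
Proof. intros H. split; intros i Hi; unfold zero_pt; auto. specialize (H i Hi); lra. Qed.

Lemma box_open n r x : box n r x -> exists d, 0 < d /\
  forall y, close n x y d -> (forall i, (n <= i)%nat -> y i = 0) -> box n r y.
Proof.
  intros [H1 H2]. exists (min_to n (fun i => r i - Rabs (x i))). split.
  - apply min_to_pos. intros i Hi. specialize (H1 i Hi).
    unfold Rabs; destruct Rcase_abs; lra.
  - intros y Hy Hz. split; auto. intros i Hi.
    specialize (Hy i Hi). specialize (H1 i Hi).
    pose proof (min_to_le n (fun i => r i - Rabs (x i)) i Hi) as Hm. simpl in Hm.
    revert Hy Hm. unfold Rabs; repeat destruct Rcase_abs; intros; lra.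
Qed.

Lemma box_upd n r x i t : box n r x -> (i < n)%nat -> - r i < t < r i -> box n r (upd x i t).
Proof.
  intros [H1 H2] Hi Ht. split.
  - intros j Hj. unfold upd. destruct (Nat.eqb_spec j i); subst; auto.
  - intros j Hj. rewrite upd_neq by lia. auto.
Qed.

Lemma box_plane n r p i j : box n r p -> (i < n)%nat -> (j < n)%nat ->
  exists d, 0 < d /\ forall u v, Rabs (u - p i) < d -> Rabs (v - p j) < d ->
    box n r (upd (upd p i u) j v).
Proof.
  intros Hp Hi Hj. destruct (box_open n r p Hp) as [d [Hd H]]. exists d; split; auto.
  intros u v Hu Hv. apply H.
  - intros k Hk. unfold upd. destruct (Nat.eqb_spec k j); subst; auto.
    destruct (Nat.eqb_spec k i); subst; auto. now rewrite Rminus_eq_0, Rabs_R0.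
  - intros k Hk. rewrite !upd_neq by lia. apply (proj2 Hp); auto.
Qed.

Lemma box_upd_near n r x i : box n r x -> (i < n)%nat ->
  exists d, 0 < d /\ forall t, Rabs (t - x i) < d -> box n r (upd x i t).
Proof.
  intros Hx Hi. destruct (box_plane n r x i i Hx Hi Hi) as [d [Hd H]].
  exists d; split; auto. intros t Ht. rewrite <- (upd_upd x i t t). auto.
Qed.

Lemma has_partial_local n r f g i x l : (forall y, box n r y -> f y = g y) ->
  box n r x -> (i < n)%nat -> has_partial f i x l -> has_partial g i x l.
Proof.
  intros E Hx Hi. rewrite !has_partial_is_derive. apply is_derive_ext_loc.
  apply locally_of_radius. destruct (box_upd_near n r x i Hx Hi) as [d [Hd Hd2]].
  exists d; split; auto.
Qed.

Lemma pd_local n r f g i x : (forall y, box n r y -> f y = g y) ->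
  box n r x -> (i < n)%nat -> pd f i x = pd g i x.
Proof.
  intros E Hx Hi. apply pd_ext. intro l.
  split; apply has_partial_local with n r; auto. intros; symmetry; auto.
Qed.

(** * Regularity on the box *)

Definition Cont (n : nat) (r : nat -> R) (f : point -> R) : Prop :=
  Defs.continuous_on n (box n r) f.

Definition Partials (n : nat) (r : nat -> R) (f : point -> R) : Prop :=
  forall i, (i < n)%nat -> forall x, box n r x -> has_partial f i x (pd f i x).

Fixpoint Ck (n : nat) (r : nat -> R) (k : nat) (f : point -> R) : Prop :=
  match k with
  | O => Cont n r f
  | S k' => Cont n r f /\ Partials n r f /\ forall i, (i < n)%nat -> Ck n r k' (pd f i)
  end.

Definition Cinf (n : nat) (r : nat -> R) (f : point -> R) : Prop := forall k, Ck n r k f.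

Lemma Ck_cont n r k f : Ck n r k f -> Cont n r f.
Proof. destruct k; simpl; tauto. Qed.

Lemma Ck_succ n r k f : Ck n r (S k) f -> Ck n r k f.
Proof.
  revert f; induction k; intros f H; simpl in *; [tauto|].
  destruct H as [H1 [H2 H3]]. auto.
Qed.

Lemma Cinf_partials n r f : Cinf n r f -> Partials n r f.
Proof. intros H. apply (H 1%nat). Qed.

Lemma Cinf_pd n r f i : (i < n)%nat -> Cinf n r f -> Cinf n r (pd f i).
Proof. intros Hi H k. apply (H (S k)); auto. Qed.

Lemma iter_pd_app is j f : iter_pd (is ++ j :: nil) f = iter_pd is (pd f j).
Proof. induction is; simpl; auto. now rewrite IHis. Qed.

Lemma smooth_on_Cinf n r f : smooth_on n (box n r) f <-> Cinf n r f.
Proof.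
  split.
  - intros H k. revert f H. induction k; intros f H; simpl.
    + apply (H nil); auto.
    + destruct (H nil (Forall_nil _)) as [H1 H2]. repeat split; auto.
      intros i Hi. apply IHk. intros is His. rewrite <- iter_pd_app.
      apply H, Forall_app; auto.
  - intros H is. revert f H. induction is using rev_ind; intros f H Hf.
    + split; [apply (H O)|apply Cinf_partials, H].
    + rewrite iter_pd_app. apply Forall_app in Hf. destruct Hf as [Hf1 Hf2].
      inversion Hf2; subst. apply IHis; auto. apply Cinf_pd; auto.
Qed.

Lemma cont_ext n r f g : (forall y, box n r y -> f y = g y) -> Cont n r f -> Cont n r g.
Proof.
  intros E H x Hx eps He. destruct (H x Hx eps He) as [d [Hd Hd2]].
  exists d; split; auto. intros y Hy Hc. rewrite <- !E by auto. auto.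
Qed.

Lemma Ck_ext n r k f g : (forall y, box n r y -> f y = g y) -> Ck n r k f -> Ck n r k g.
Proof.
  revert f g; induction k; intros f g E H; simpl in *; [eapply cont_ext; eauto|].
  destruct H as [H1 [H2 H3]].
  assert (Ep : forall i, (i < n)%nat -> forall y, box n r y -> pd f i y = pd g i y)
    by (intros; apply pd_local with n r; auto).
  split; [eapply cont_ext; eauto|split].
  - intros i Hi x Hx. rewrite <- Ep by auto. apply has_partial_local with n r f; auto.
  - intros i Hi. apply IHk with (pd f i); auto.
Qed.

Lemma cont_comp2 n r f g (phi : R -> R -> R) : Cont n r f -> Cont n r g ->
  (forall x, box n r x -> continuity_2d_pt phi (f x) (g x)) ->
  Cont n r (fun x => phi (f x) (g x)).
Proof.
  intros Hf Hg Hp x Hx eps He. destruct (Hp x Hx (mkposreal eps He)) as [d0 Hd0].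
  destruct (Hf x Hx d0 (cond_pos d0)) as [d1 [Hd1 H1]].
  destruct (Hg x Hx d0 (cond_pos d0)) as [d2 [Hd2 H2]].
  exists (Rmin d1 d2). split; [apply Rmin_pos; auto|].
  intros y Hy Hc. apply Hd0; [apply H1|apply H2]; auto; intros i Hi;
    (eapply Rlt_le_trans; [apply Hc; auto|]); [apply Rmin_l|apply Rmin_r].
Qed.

Lemma cont_const n r c : Cont n r (fun _ => c).
Proof.
  intros x Hx eps He. exists 1; split; [lra|]. intros. now rewrite Rminus_eq_0, Rabs_R0.
Qed.

Lemma cont_plus n r f g : Cont n r f -> Cont n r g -> Cont n r (fun x => f x + g x).
Proof.
  intros; apply cont_comp2 with (phi := fun u v => u + v); auto. intros.
  apply continuity_2d_pt_plus; [apply continuity_2d_pt_id1|apply continuity_2d_pt_id2].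
Qed.

Lemma cont_mult n r f g : Cont n r f -> Cont n r g -> Cont n r (fun x => f x * g x).
Proof.
  intros; apply cont_comp2 with (phi := fun u v => u * v); auto. intros.
  apply continuity_2d_pt_mult; [apply continuity_2d_pt_id1|apply continuity_2d_pt_id2].
Qed.

Lemma cont_coord n r j : Cont n r (fun x => x j).
Proof.
  intros x Hx eps He. exists eps; split; auto. intros y Hy Hc.
  destruct (Compare_dec.lt_dec j n); [apply Hc; auto|].
  rewrite (proj2 Hy j), (proj2 Hx j) by lia. now rewrite Rminus_eq_0, Rabs_R0.
Qed.

Lemma cont_plane n r F p i j : Cont n r F -> box n r p -> (i < n)%nat -> (j < n)%nat ->
  continuity_2d_pt (fun u v => F (upd (upd p i u) j v)) (p i) (p j).
Proof.
  intros HF Hp Hi Hj eps. destruct (HF p Hp eps (cond_pos eps)) as [d1 [Hd1 H1]].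
  destruct (box_plane n r p i j Hp Hi Hj) as [d [Hd H]].
  exists (mkposreal _ (Rmin_pos _ _ Hd1 Hd)). simpl. intros u v Hu Hv.
  pose proof (Rmin_l d1 d). pose proof (Rmin_r d1 d).
  rewrite !upd_same. apply H1; [apply H; lra|].
  intros k Hk. unfold upd. destruct (Nat.eqb_spec k j); [subst; lra|].
  destruct (Nat.eqb_spec k i); [subst; lra|]. now rewrite Rminus_eq_0, Rabs_R0.
Qed.

Lemma Ck_const n r k c : Ck n r k (fun _ => c).
Proof.
  revert c; induction k; intros c; simpl; [apply cont_const|].
  repeat split; [apply cont_const| |]; intros i Hi; rewrite pd_const; auto.
  intros; apply has_partial_const.
Qed.

Lemma Ck_plus n r k f g : Ck n r k f -> Ck n r k g -> Ck n r k (fun x => f x + g x).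
Proof.
  revert f g; induction k; intros f g Hf Hg; simpl in *; [apply cont_plus; auto|].
  destruct Hf as [F1 [F2 F3]], Hg as [G1 [G2 G3]].
  assert (E : forall i, (i < n)%nat -> forall x, box n r x ->
      pd (fun x => f x + g x) i x = pd f i x + pd g i x)
    by (intros; apply pd_unique, has_partial_plus; auto).
  split; [apply cont_plus; auto|split].
  - intros i Hi x Hx. rewrite E by auto. apply has_partial_plus; auto.
  - intros i Hi. apply Ck_ext with (fun x => pd f i x + pd g i x); auto.
    intros; rewrite E; auto.
Qed.

Lemma Ck_mult n r k f g : Ck n r k f -> Ck n r k g -> Ck n r k (fun x => f x * g x).
Proof.
  revert f g; induction k; intros f g Hf Hg; [simpl in *; apply cont_mult; auto|].
  pose proof (Ck_succ _ _ _ _ Hf) as Hf'. pose proof (Ck_succ _ _ _ _ Hg) as Hg'.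
  simpl in Hf, Hg. destruct Hf as [F1 [F2 F3]], Hg as [G1 [G2 G3]].
  assert (E : forall i, (i < n)%nat -> forall x, box n r x ->
      pd (fun x => f x * g x) i x = pd f i x * g x + f x * pd g i x)
    by (intros; apply pd_unique, has_partial_mult; auto).
  simpl. split; [apply cont_mult; auto|split].
  - intros i Hi x Hx. rewrite E by auto. apply has_partial_mult; auto.
  - intros i Hi. apply Ck_ext with (fun x => pd f i x * g x + f x * pd g i x).
    + intros; rewrite E; auto.
    + apply Ck_plus; apply IHk; auto.
Qed.

Lemma Ck_sum n r k N F : (forall a, (a < N)%nat -> Ck n r k (F a)) ->
  Ck n r k (fun x => sum_to N (fun a => F a x)).
Proof.
  induction N; intros H; simpl; [apply Ck_const|].
  apply Ck_plus; [apply IHN; intros|]; apply H; lia.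
Qed.

Lemma Ck_coord n r k j : Ck n r k (fun x => x j).
Proof.
  destruct k; simpl; [apply cont_coord|].
  repeat split; [apply cont_coord| |]; intros i Hi; rewrite pd_coord.
  - intros; apply has_partial_coord.
  - apply Ck_const.
Qed.

(** * Integrals along coordinate segments *)

Definition zero_below (nu : nat) (q : point) : point :=
  fun j => if Nat.ltb j nu then 0 else q j.

Lemma zero_below_box n r nu q : box n r q -> box n r (zero_below nu q).
Proof.
  intros Hq. pose proof Hq as [H1 H2].
  split; intros i Hi; unfold zero_below; destruct (Nat.ltb i nu); auto.
  pose proof (box_radius_pos n r q i Hq Hi). lra.
Qed.

Lemma zero_below_upd_lt nu q i t : (i < nu)%nat -> zero_below nu (upd q i t) = zero_below nu q.
Proof.
  intros H. apply functional_extensionality; intro j; unfold zero_below, upd.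
  destruct (Nat.ltb_spec j nu); auto. destruct (Nat.eqb_spec j i); auto. lia.
Qed.

Lemma zero_below_upd_ge nu q i t : (nu <= i)%nat ->
  zero_below nu (upd q i t) = upd (zero_below nu q) i t.
Proof.
  intros H. apply functional_extensionality; intro j; unfold zero_below, upd.
  destruct (Nat.ltb_spec j nu); destruct (Nat.eqb_spec j i); auto; lia.
Qed.

Lemma zero_below_ge nu q i : (nu <= i)%nat -> zero_below nu q i = q i.
Proof. intros H; unfold zero_below. destruct (Nat.ltb_spec i nu); auto; lia. Qed.

Lemma zero_below_0 q : zero_below 0 q = q.
Proof. apply functional_extensionality; intro j; unfold zero_below. now destruct (Nat.ltb_spec j 0). Qed.

Lemma zero_below_zero nu : zero_below nu zero_pt = zero_pt.
Proof.
  apply functional_extensionality; intro j; unfold zero_below, zero_pt. now destruct (Nat.ltb j nu).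
Qed.

Lemma has_partial_zero_below n r nu G i x : Partials n r G -> box n r x -> (i < n)%nat ->
  has_partial (fun q => G (zero_below nu q)) i x
    (if Nat.ltb i nu then 0 else pd G i (zero_below nu x)).
Proof.
  intros HG Hx Hi. rewrite has_partial_is_derive. destruct (Nat.ltb_spec i nu).
  - eapply is_derive_ext; [|exact (is_derive_const (K:=R_AbsRing) (G (zero_below nu x)) (x i))].
    intros t; simpl. now rewrite zero_below_upd_lt.
  - pose proof (HG i Hi _ (zero_below_box n r nu x Hx)) as HGi.
    rewrite has_partial_is_derive, zero_below_ge in HGi by auto.
    eapply is_derive_ext; [|exact HGi]. intros t; simpl. now rewrite zero_below_upd_ge.
Qed.

Lemma Ck_zero_below n r k nu G : Ck n r k G -> Ck n r k (fun q => G (zero_below nu q)).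
Proof.
  revert G; induction k; intros G HG.
  - intros x Hx eps He.
    destruct (HG (zero_below nu x) (zero_below_box _ _ _ _ Hx) eps He) as [d [Hd H]].
    exists d; split; auto. intros y Hy Hc. apply H; [now apply (zero_below_box n r)|].
    intros i Hi. unfold zero_below. destruct (Nat.ltb i nu); auto.
    now rewrite Rminus_eq_0, Rabs_R0.
  - pose proof (Ck_succ _ _ _ _ HG) as HG'. simpl in HG. destruct HG as [_ [G2 G3]].
    assert (E : forall i, (i < n)%nat -> forall x, box n r x ->
        pd (fun q => G (zero_below nu q)) i x =
        if Nat.ltb i nu then 0 else pd G i (zero_below nu x))
      by (intros; apply pd_unique, (has_partial_zero_below n r); auto).
    split; [exact (Ck_cont _ _ _ _ (IHk G HG'))|split].
    + intros i Hi x Hx. rewrite E by auto. apply (has_partial_zero_below n r); auto.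
    + intros i Hi. eapply Ck_ext; [intros y Hy; symmetry; apply E; auto|].
      destruct (Nat.ltb i nu); [apply Ck_const|apply IHk, G3; auto].
Qed.

Lemma slot_pt_zero_below q nu t : slot_pt q nu t = upd (zero_below nu q) nu t.
Proof.
  apply functional_extensionality; intro j; unfold slot_pt, upd, zero_below.
  destruct (Nat.ltb_spec j nu); destruct (Nat.eqb_spec j nu); auto; lia.
Qed.

Lemma slot_pt_upd_le q nu j s t : (j <= nu)%nat -> slot_pt (upd q j s) nu t = slot_pt q nu t.
Proof.
  intros H. rewrite !slot_pt_zero_below. destruct (Nat.eq_dec j nu) as [->|].
  - rewrite zero_below_upd_ge by lia. apply upd_upd.
  - now rewrite zero_below_upd_lt by lia.
Qed.

Lemma slot_pt_upd_gt q nu j s t : (nu < j)%nat ->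
  slot_pt (upd q j s) nu t = upd (slot_pt q nu t) j s.
Proof.
  intros H. rewrite !slot_pt_zero_below, zero_below_upd_ge by lia. apply upd_comm. lia.
Qed.

Lemma upd_slot_pt q nu t0 t : upd (slot_pt q nu t0) nu t = slot_pt q nu t.
Proof. rewrite !slot_pt_zero_below. apply upd_upd. Qed.

Lemma slot_pt_top q nu : slot_pt q nu (q nu) = zero_below nu q.
Proof. rewrite slot_pt_zero_below, <- (zero_below_ge nu q nu) by lia. apply upd_same. Qed.

Lemma slot_pt_bot q nu : slot_pt q nu 0 = zero_below (S nu) q.
Proof.
  apply functional_extensionality; intro j; unfold slot_pt, zero_below.
  destruct (Nat.ltb_spec j nu); destruct (Nat.eqb_spec j nu);
    destruct (Nat.ltb_spec j (S nu)); auto; lia.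
Qed.

Lemma slot_pt_gt q nu t j : (nu < j)%nat -> slot_pt q nu t j = q j.
Proof.
  intros H; unfold slot_pt. destruct (Nat.ltb_spec j nu); destruct (Nat.eqb_spec j nu); auto; lia.
Qed.

Lemma slot_pt_eq q nu t : slot_pt q nu t nu = t.
Proof. unfold slot_pt. rewrite Nat.eqb_refl. destruct (Nat.ltb_spec nu nu); auto; lia. Qed.

Lemma box_slot_pt n r q nu t : box n r q -> (nu < n)%nat -> - r nu < t < r nu ->
  box n r (slot_pt q nu t).
Proof.
  intros Hq Hnu Ht. rewrite slot_pt_zero_below. apply box_upd; auto. now apply zero_below_box.
Qed.

Lemma between_0_in_interval a b : - a < b < a ->
  forall t, Rmin 0 b <= t <= Rmax 0 b -> - a < t < a.
Proof.
  intros H t [Ht1 Ht2]. split.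
  - eapply Rlt_le_trans; [|apply Ht1]. apply Rmin_glb_lt; lra.
  - eapply Rle_lt_trans; [apply Ht2|]. apply Rmax_lub_lt; lra.
Qed.

Lemma integral_RInt f a b : ex_RInt f a b -> integral f a b = RInt f a b.
Proof.
  intros H. pose proof (ex_RInt_Reals_0 _ _ _ H) as pr. unfold integral.
  assert (E : exists I, exists pr : Riemann_integrable f a b, RiemannInt pr = I)
    by (exists (RiemannInt pr); exists pr; auto).
  destruct (epsilon_spec (inhabits 0) _ E) as [pr' <-]. symmetry. apply RInt_Reals.
Qed.

Lemma cont_line n r G p i t : Cont n r G -> (i < n)%nat -> box n r (upd p i t) ->
  continuous (fun s => G (upd p i s)) t.
Proof.
  intros HG Hi Hb. apply continuity_pt_filterlim.
  intros eps He. destruct (HG _ Hb eps He) as [d [Hd H]].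
  destruct (box_upd_near n r (upd p i t) i Hb Hi) as [d2 [Hd2 H2]].
  exists (Rmin d d2). split; [apply Rmin_pos; auto|].
  intros y [_ Hy]. unfold R_dist in *. simpl. apply H.
  - rewrite <- (upd_upd p i t y). apply H2. rewrite upd_eq.
    eapply Rlt_le_trans; [exact Hy|apply Rmin_r].
  - intros j Hj. unfold upd. destruct (Nat.eqb_spec j i).
    + eapply Rlt_le_trans; [exact Hy|apply Rmin_l].
    + now rewrite Rminus_eq_0, Rabs_R0.
Qed.

Lemma cont_slot_line n r G q nu t : Cont n r G -> box n r q -> (nu < n)%nat ->
  - r nu < t < r nu -> continuous (fun s => G (slot_pt q nu s)) t.
Proof.
  intros HG Hq Hnu Ht.
  apply (continuous_ext (fun s => G (upd (zero_below nu q) nu s))).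
  - intros s. now rewrite slot_pt_zero_below.
  - apply cont_line with n r; auto. rewrite <- slot_pt_zero_below. now apply box_slot_pt.
Qed.

Lemma ex_RInt_slot n r G q nu a b : Cont n r G -> box n r q -> (nu < n)%nat ->
  - r nu < a < r nu -> - r nu < b < r nu -> ex_RInt (fun t => G (slot_pt q nu t)) a b.
Proof.
  intros HG Hq Hnu Ha Hb. apply (ex_RInt_continuous (V:=R_CompleteNormedModule)).
  intros z Hz. apply cont_slot_line with n r; auto.
  split; [eapply Rlt_le_trans; [|apply Hz]; apply Rmin_glb_lt
         |eapply Rle_lt_trans; [apply Hz|]; apply Rmax_lub_lt]; lra.
Qed.

Definition slot_int (nu : nat) (G : point -> R) (q : point) : R :=
  integral (fun t => G (slot_pt q nu t)) 0 (q nu).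

Lemma slot_int_RInt n r nu G q : Cont n r G -> box n r q -> (nu < n)%nat ->
  slot_int nu G q = RInt (fun t => G (slot_pt q nu t)) 0 (q nu).
Proof.
  intros HG Hq Hnu. apply integral_RInt, ex_RInt_slot with n r; auto.
  - pose proof (box_radius_pos n r q nu Hq Hnu). lra.
  - apply (proj1 Hq); auto.
Qed.

Lemma slot_int_zero n r nu G : Cont n r G -> (forall i, (i < n)%nat -> 0 < r i) ->
  (nu < n)%nat -> slot_int nu G zero_pt = 0.
Proof.
  intros HG Hr Hnu. rewrite slot_int_RInt with n r nu G zero_pt; auto; [|apply box_zero; auto].
  exact (RInt_point (V:=R_CompleteNormedModule) 0 _).
Qed.

Lemma has_partial_slot_int_lt nu G q j : (j < nu)%nat -> has_partial (slot_int nu G) j q 0.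
Proof.
  intros H. rewrite has_partial_is_derive.
  eapply is_derive_ext; [|exact (is_derive_const (K:=R_AbsRing) (slot_int nu G q) (q j))].
  intros s. simpl. unfold slot_int. rewrite upd_neq by lia. f_equal.
  apply functional_extensionality; intro t. rewrite slot_pt_upd_le by lia. auto.
Qed.

Lemma has_partial_slot_int_eq n r nu G q : Cont n r G -> box n r q -> (nu < n)%nat ->
  has_partial (slot_int nu G) nu q (G (zero_below nu q)).
Proof.
  intros HG Hq Hnu. rewrite has_partial_is_derive.
  set (g := fun t => G (slot_pt q nu t)).
  pose proof (proj1 Hq nu Hnu) as Hqn.
  assert (Hloc : exists d, 0 < d /\ forall s, Rabs (s - q nu) < d -> - r nu < s < r nu).
  { exists (Rmin (r nu - q nu) (q nu + r nu)). split; [apply Rmin_pos; lra|].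
    intros s Hs. pose proof (Rmin_l (r nu - q nu) (q nu + r nu)).
    pose proof (Rmin_r (r nu - q nu) (q nu + r nu)).
    revert Hs. unfold Rabs; destruct Rcase_abs; intros; lra. }
  destruct Hloc as [d [Hd Hin]].
  assert (Hint : forall s, Rabs (s - q nu) < d -> ex_RInt g 0 s)
    by (intros s Hs; apply ex_RInt_slot with n r; auto; lra).
  apply is_derive_ext_loc with (fun s => RInt g 0 s).
  { apply locally_of_radius. exists d; split; auto. intros s Hs.
    unfold slot_int. rewrite upd_eq, integral_RInt.
    - apply RInt_ext. intros x _. unfold g. now rewrite slot_pt_upd_le.
    - apply (ex_RInt_ext g); auto. intros x _. unfold g. now rewrite slot_pt_upd_le. }
  rewrite <- slot_pt_top. fold (g (q nu)).
  apply (is_derive_RInt (V:=R_CompleteNormedModule) g (RInt g 0) 0).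
  - apply locally_of_radius. exists d; split; auto. intros s Hs.
    now apply (RInt_correct (V:=R_CompleteNormedModule)), Hint.
  - apply cont_slot_line with n r; auto.
Qed.

Section DifferentiationUnderIntegral.

Variables (n : nat) (r : nat -> R) (G : point -> R) (q : point) (nu j : nat).
Hypotheses (HG : Cont n r G) (HGp : Partials n r G) (HGj : Cont n r (pd G j))
  (Hq : box n r q) (Hnuj : (nu < j)%nat) (Hj : (j < n)%nat).

Let moved (s t : R) : point := upd (slot_pt q nu t) j s.

Let box_moved s t : box n r (upd q j s) -> - r nu < t < r nu -> box n r (moved s t).
Proof. intros Hs Ht. unfold moved. rewrite <- slot_pt_upd_gt by lia. apply box_slot_pt; auto; lia. Qed.

Let is_derive_moved s t : box n r (moved s t) ->
  is_derive (fun u => G (moved u t)) s (pd G j (moved s t)).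
Proof.
  intros Hb. pose proof (HGp j Hj _ Hb) as H. rewrite has_partial_is_derive in H.
  unfold moved in *. rewrite upd_eq in H.
  eapply is_derive_ext; [|exact H]. intros u; simpl. now rewrite upd_upd.
Qed.

Let cont_moved t : - r nu < t < r nu ->
  continuity_2d_pt (fun s v => Derive (fun u => G (moved u v)) s) (q j) t.
Proof.
  intros Ht. set (p0 := slot_pt q nu t).
  assert (Hp0 : box n r p0) by (apply box_slot_pt; auto; lia).
  destruct (box_plane n r p0 j nu Hp0 Hj ltac:(lia)) as [d [Hd Hb]].
  pose proof (cont_plane n r (pd G j) p0 j nu HGj Hp0 Hj ltac:(lia)) as C.
  assert (E1 : p0 j = q j) by (apply slot_pt_gt; auto).
  assert (E2 : p0 nu = t) by apply slot_pt_eq.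
  rewrite E1, E2 in C.
  eapply continuity_2d_pt_ext_loc; [|exact C].
  exists (mkposreal d Hd). simpl. intros u v Hu Hv.
  assert (E : upd (upd p0 j u) nu v = moved u v)
    by (unfold moved, p0; rewrite upd_comm, upd_slot_pt by lia; auto).
  rewrite E. symmetry. apply is_derive_unique, is_derive_moved. rewrite <- E.
  apply Hb; [rewrite E1|rewrite E2]; auto.
Qed.

Lemma has_partial_slot_int_gt : has_partial (slot_int nu G) j q (slot_int nu (pd G j) q).
Proof.
  assert (Hnu : (nu < n)%nat) by lia.
  pose proof (proj1 Hq nu Hnu) as Hqn.
  pose proof (between_0_in_interval (r nu) (q nu) Hqn) as Hint.
  destruct (box_upd_near n r q j Hq Hj) as [d [Hd Hbd]].
  assert (Hex : forall s, Rabs (s - q j) < d -> ex_RInt (fun t => G (moved s t)) 0 (q nu)).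
  { intros s Hs. apply (ex_RInt_ext (fun t => G (slot_pt (upd q j s) nu t))).
    - intros t _. unfold moved. now rewrite slot_pt_upd_gt.
    - apply ex_RInt_slot with n r; auto; lra. }
  rewrite has_partial_is_derive.
  apply is_derive_ext_loc with (fun s => RInt (fun t => G (moved s t)) 0 (q nu)).
  { apply locally_of_radius. exists d; split; auto. intros s Hs.
    unfold slot_int. rewrite upd_neq by lia. rewrite integral_RInt.
    - apply RInt_ext. intros x _. unfold moved. now rewrite slot_pt_upd_gt.
    - apply ex_RInt_slot with n r; auto; lra. }
  replace (slot_int nu (pd G j) q) with
    (RInt (fun t => Derive (fun u => G (moved u t)) (q j)) 0 (q nu)).
  2:{ rewrite slot_int_RInt with n r nu (pd G j) q; auto. apply RInt_ext. intros t Ht.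
      assert (Hm : moved (q j) t = slot_pt q nu t) by (unfold moved;
        rewrite <- (slot_pt_gt q nu t j) by auto; apply upd_same).
      rewrite <- Hm. apply is_derive_unique, is_derive_moved, box_moved;
        [rewrite upd_same|apply Hint; lra]; auto. }
  apply (is_derive_RInt_param (fun s t => G (moved s t)) 0 (q nu) (q j)).
  - apply locally_of_radius. exists d; split; auto. intros s Hs t Ht.
    eexists. apply is_derive_moved, box_moved; auto.
  - intros t Ht. apply cont_moved, Hint; auto.
  - apply locally_of_radius. exists d; split; auto.
Qed.

End DifferentiationUnderIntegral.

Lemma close_slot_pt n q q' nu t t' d : Rabs (t - t') < d -> close n q q' d ->
  close n (slot_pt q nu t') (slot_pt q' nu t) d.
Proof.
  intros Ht Hc i Hi. unfold slot_pt. destruct (Nat.ltb_spec i nu).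
  - rewrite Rminus_eq_0, Rabs_R0. eapply Rle_lt_trans; [apply Rabs_pos|exact Ht].
  - destruct (Nat.eqb_spec i nu); auto.
Qed.

Lemma slot_pt_equicont n r G q nu alpha : Cont n r G -> box n r q -> (nu < n)%nat ->
  0 <= alpha < r nu -> forall eps, 0 < eps -> exists d, 0 < d /\
    forall q', box n r q' -> close n q q' d -> forall t, - alpha <= t <= alpha ->
      Rabs (G (slot_pt q' nu t) - G (slot_pt q nu t)) < eps.
Proof.
  intros HG Hq Hnu Ha eps He.
  assert (Hex : forall t, exists dl, 0 < dl /\ (- alpha <= t <= alpha -> forall y, box n r y ->
      close n (slot_pt q nu t) y dl -> Rabs (G y - G (slot_pt q nu t)) < eps / 2)).
  { intros t. destruct (classic (- alpha <= t <= alpha)) as [Ht|Ht].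
    - assert (Hb : box n r (slot_pt q nu t)) by (apply box_slot_pt; auto; lra).
      destruct (HG _ Hb (eps / 2)) as [dl [Hdl H]]; [lra|]. exists dl; split; auto.
    - exists 1; split; [lra|]. intros; contradiction. }
  destruct (choice _ Hex) as [dl Hdl].
  destruct (compactness_value_1d (- alpha) alpha
    (fun t => mkposreal (dl t) (proj1 (Hdl t)))) as [d Hd].
  exists d. split; [apply cond_pos|]. intros q' Hq' Hc t Ht.
  apply NNPP; intro Hn. apply (Hd t Ht). intros [t' [Ht' [H1 H2]]]. apply Hn. simpl in H1, H2.
  destruct (Hdl t') as [_ P2].
  assert (A1 : Rabs (G (slot_pt q' nu t) - G (slot_pt q nu t')) < eps / 2).
  { apply P2; auto; [apply box_slot_pt; auto; lra|]. apply close_slot_pt; auto.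
    intros i Hi. eapply Rlt_le_trans; [apply Hc; auto|auto]. }
  assert (A2 : Rabs (G (slot_pt q nu t) - G (slot_pt q nu t')) < eps / 2).
  { apply P2; auto; [apply box_slot_pt; auto; lra|]. apply close_slot_pt; auto.
    intros i Hi. rewrite Rminus_eq_0, Rabs_R0. apply (Hdl t'). }
  revert A1 A2. unfold Rabs; repeat destruct Rcase_abs; intros; lra.
Qed.

Lemma continuous_eps (f : R -> R) x : continuous f x ->
  forall eps, 0 < eps -> exists d, 0 < d /\ forall y, Rabs (y - x) < d -> Rabs (f y - f x) < eps.
Proof.
  intros Hf eps He. apply continuity_pt_filterlim in Hf.
  destruct (Hf eps He) as [d [Hd H]]. exists d; split; auto. intros y Hy.
  destruct (Req_dec y x) as [->|Hne]; [now rewrite Rminus_eq_0, Rabs_R0|].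
  apply (H y). repeat split; auto.
Qed.

Lemma abs_RInt_le_const_abs f a b M : ex_RInt f a b ->
  (forall t, Rmin a b <= t <= Rmax a b -> Rabs (f t) <= M) ->
  Rabs (RInt f a b) <= Rabs (b - a) * M.
Proof.
  intros He H. apply (norm_RInt_le_const_abs (V:=R_NormedModule) f a b); auto.
  now apply (RInt_correct (V:=R_CompleteNormedModule)).
Qed.

Lemma slot_int_sub n r nu G x y : Cont n r G -> box n r x -> box n r y -> (nu < n)%nat ->
  slot_int nu G y - slot_int nu G x =
  RInt (fun t => G (slot_pt y nu t) - G (slot_pt x nu t)) 0 (y nu)
  + (RInt (fun t => G (slot_pt x nu t)) 0 (y nu) - RInt (fun t => G (slot_pt x nu t)) 0 (x nu)).
Proof.
  intros HG Hx Hy Hnu.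
  pose proof (proj1 Hy nu Hnu). pose proof (box_radius_pos n r y nu Hy Hnu).
  rewrite (slot_int_RInt n r nu G y), (slot_int_RInt n r nu G x) by auto.
  assert (D : RInt (fun t => G (slot_pt y nu t) - G (slot_pt x nu t)) 0 (y nu) =
    RInt (fun t => G (slot_pt y nu t)) 0 (y nu) - RInt (fun t => G (slot_pt x nu t)) 0 (y nu))
    by (apply (RInt_minus (V:=R_CompleteNormedModule)); apply ex_RInt_slot with n r; auto; lra).
  rewrite D. ring.
Qed.

Lemma cont_slot_int n r nu G : Cont n r G -> (nu < n)%nat -> Cont n r (slot_int nu G).
Proof.
  intros HG Hnu x Hx eps He.
  pose proof (proj1 Hx nu Hnu) as Hxn.
  set (a := Rabs (x nu)). assert (Ha : a < r nu) by (unfold a, Rabs; destruct Rcase_abs; lra).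
  set (alpha := (a + r nu) / 2).
  assert (Hal : a < alpha < r nu) by (unfold alpha; lra).
  assert (Ha0 : 0 <= a) by apply Rabs_pos.
  assert (He1 : 0 < eps / (2 * (alpha + 1))) by (apply Rdiv_lt_0_compat; lra).
  destruct (slot_pt_equicont n r G x nu alpha HG Hx Hnu ltac:(lra) _ He1) as [d1 [Hd1 T]].
  set (g := fun t => G (slot_pt x nu t)).
  assert (CPhi : continuous (RInt g 0) (x nu)).
  { apply (continuous_RInt_1 (V:=R_CompleteNormedModule) g 0 (x nu)).
    apply locally_of_radius. exists (alpha - a); split; [lra|]. intros s Hs.
    apply (RInt_correct (V:=R_CompleteNormedModule)), ex_RInt_slot with n r; auto; [lra|].
    revert Hs. unfold a, Rabs; repeat destruct Rcase_abs; intros; lra. }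
  destruct (continuous_eps _ _ CPhi (eps / 2)) as [d2 [Hd2 C2]]; [lra|].
  exists (Rmin d1 (Rmin (alpha - a) d2)). split; [repeat apply Rmin_pos; lra|].
  intros y Hy Hc.
  pose proof (Rmin_l d1 (Rmin (alpha - a) d2)). pose proof (Rmin_r d1 (Rmin (alpha - a) d2)).
  pose proof (Rmin_l (alpha - a) d2). pose proof (Rmin_r (alpha - a) d2).
  assert (Hyn : Rabs (y nu - x nu) < Rmin (alpha - a) d2) by (eapply Rlt_le_trans; [apply Hc|]; auto).
  assert (Hyb : Rabs (y nu) <= alpha)
    by (pose proof (Rabs_triang_inv (y nu) (x nu)) as Htr; fold a in Htr; lra).
  assert (Hyr : - r nu < y nu < r nu) by (revert Hyb; unfold Rabs; destruct Rcase_abs; intros; lra).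
  rewrite (slot_int_sub n r nu G x y) by auto. fold g.
  eapply Rle_lt_trans; [apply Rabs_triang|].
  assert (B1 : Rabs (RInt (fun t => G (slot_pt y nu t) - G (slot_pt x nu t)) 0 (y nu))
              <= Rabs (y nu - 0) * (eps / (2 * (alpha + 1)))).
  { apply abs_RInt_le_const_abs.
    - apply (ex_RInt_minus (V:=R_NormedModule)); apply ex_RInt_slot with n r; auto; lra.
    - intros t Ht. left. apply T; auto; [intros i Hi; eapply Rlt_le_trans; [apply Hc|]; auto|].
      revert Ht Hyb. unfold Rmin, Rmax, Rabs; repeat destruct Rle_dec; repeat destruct Rcase_abs; intros; lra. }
  assert (B2 : Rabs (y nu - 0) * (eps / (2 * (alpha + 1))) < eps / 2).
  { rewrite Rminus_0_r. apply Rle_lt_trans with (alpha * (eps / (2 * (alpha + 1)))).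
    - apply Rmult_le_compat_r; lra.
    - apply Rmult_lt_reg_r with (2 * (alpha + 1)); [lra|]. unfold Rdiv. field_simplify; lra. }
  specialize (C2 (y nu) ltac:(lra)). lra.
Qed.

Definition slot_int_pd (nu : nat) (G : point -> R) (j : nat) (q : point) : R :=
  if Nat.ltb j nu then 0
  else if Nat.eqb j nu then G (zero_below nu q)
  else slot_int nu (pd G j) q.

Lemma has_partial_slot_int n r nu G j x : Ck n r 1 G -> box n r x -> (j < n)%nat -> (nu < n)%nat ->
  has_partial (slot_int nu G) j x (slot_int_pd nu G j x).
Proof.
  intros [G1 [G2 G3]] Hx Hj Hnu. unfold slot_int_pd.
  destruct (Nat.ltb_spec j nu); [apply has_partial_slot_int_lt; auto|].
  destruct (Nat.eqb_spec j nu) as [->|]; [apply has_partial_slot_int_eq with n r; auto|].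
  apply (has_partial_slot_int_gt n r); auto; [exact (G3 j Hj)|lia].
Qed.

Lemma Ck_slot_int n r nu k G : (nu < n)%nat -> Cinf n r G -> Ck n r k (slot_int nu G).
Proof.
  intros Hnu. revert G. induction k; intros G HG; [apply cont_slot_int; auto; apply (HG O)|].
  assert (E : forall j, (j < n)%nat -> forall x, box n r x ->
      pd (slot_int nu G) j x = slot_int_pd nu G j x)
    by (intros; apply pd_unique, has_partial_slot_int with n r; auto).
  split; [apply cont_slot_int; auto; apply (HG O)|split].
  - intros j Hj x Hx. rewrite E by auto. apply has_partial_slot_int with n r; auto.
  - intros j Hj. apply Ck_ext with (slot_int_pd nu G j); [intros y Hy; rewrite E; auto|].
    unfold slot_int_pd. destruct (Nat.ltb j nu); [apply Ck_const|].
    destruct (Nat.eqb j nu); [apply Ck_zero_below, HG|apply IHk, Cinf_pd; auto].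
Qed.

(** * Symmetry of second derivatives *)

Section Schwarz.

Variables (n : nat) (r : nat -> R) (f : point -> R) (x : point) (i j : nat).
Hypotheses (Hf : Ck n r 2 f) (Hx : box n r x) (Hi : (i < n)%nat) (Hj : (j < n)%nat)
  (Hij : i <> j).

Let plane (u v : R) : point := upd (upd x i u) j v.

Let plane_upd_j u v t : upd (plane u v) j t = plane u t.
Proof. apply upd_upd. Qed.

Let plane_upd_i u v t : upd (plane u v) i t = plane t v.
Proof. unfold plane. rewrite (upd_comm (upd x i u) j i) by auto. now rewrite upd_upd. Qed.

Let is_derive_plane_i (g : point -> R) u v : Partials n r g -> box n r (plane u v) ->
  is_derive (fun t => g (plane t v)) u (pd g i (plane u v)).
Proof.
  intros Hg Hb. pose proof (Hg i Hi _ Hb) as H. rewrite has_partial_is_derive in H.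
  replace (plane u v i) with u in H by (unfold plane; rewrite upd_neq by auto; now rewrite upd_eq).
  eapply is_derive_ext; [|exact H]. intros t; simpl. now rewrite plane_upd_i.
Qed.

Let is_derive_plane_j (g : point -> R) u v : Partials n r g -> box n r (plane u v) ->
  is_derive (fun t => g (plane u t)) v (pd g j (plane u v)).
Proof.
  intros Hg Hb. pose proof (Hg j Hj _ Hb) as H. rewrite has_partial_is_derive in H.
  replace (plane u v j) with v in H by (unfold plane; now rewrite upd_eq).
  eapply is_derive_ext; [|exact H]. intros t; simpl. now rewrite plane_upd_j.
Qed.

Lemma pd_comm_ne : pd (pd f j) i x = pd (pd f i) j x.
Proof.
  destruct Hf as [_ [Pf Hf1]].
  destruct (Hf1 i Hi) as [_ [Pi Ci]]. destruct (Hf1 j Hj) as [_ [Pj Cj]].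
  destruct (box_plane n r x i j Hx Hi Hj) as [d [Hd Hb]].
  set (F := fun u v => f (plane u v)).
  assert (Bx : forall u v, Rabs (u - x i) < d -> Rabs (v - x j) < d -> box n r (plane u v)) by auto.
  assert (Half : forall a b z, Rabs (a - b) < d / 2 -> Rabs (z - a) < d / 2 -> Rabs (z - b) < d).
  { intros a b z H1 H2. pose proof (Rabs_triang (z - a) (a - b)).
    replace (z - a + (a - b)) with (z - b) in H by ring. lra. }
  assert (Dc : forall u v, Rabs (u - x i) < d / 2 -> Rabs (v - x j) < d / 2 ->
      is_derive (fun z => Derive (fun t => F z t) v) u (pd (pd f j) i (plane u v))).
  { intros u v Hu Hv. apply is_derive_ext_loc with (fun z => pd f j (plane z v)).
    - apply locally_of_radius. exists (d / 2). split; [lra|]. intros z Hz.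
      symmetry. apply is_derive_unique, is_derive_plane_j, Bx; [|apply Half with u|]; auto; lra.
    - apply is_derive_plane_i, Bx; auto; lra. }
  assert (Dd : forall u v, Rabs (u - x i) < d / 2 -> Rabs (v - x j) < d / 2 ->
      is_derive (fun z => Derive (fun t => F t z) u) v (pd (pd f i) j (plane u v))).
  { intros u v Hu Hv. apply is_derive_ext_loc with (fun z => pd f i (plane u z)).
    - apply locally_of_radius. exists (d / 2). split; [lra|]. intros z Hz.
      symmetry. apply is_derive_unique, is_derive_plane_i, Bx; [|auto|apply Half with v]; auto; lra.
    - apply is_derive_plane_j, Bx; auto; lra. }
  assert (Hd2 : 0 < d / 2) by lra.
  assert (Z0 : forall a, Rabs (a - a) < d / 2) by (intros; rewrite Rminus_eq_0, Rabs_R0; lra).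
  assert (Px : plane (x i) (x j) = x) by (unfold plane; now rewrite !upd_same).
  rewrite <- Px, <- (is_derive_unique _ _ _ (Dc _ _ (Z0 _) (Z0 _))),
    <- (is_derive_unique _ _ _ (Dd _ _ (Z0 _) (Z0 _))).
  apply Schwarz.
  - exists (mkposreal _ Hd2). simpl. intros u v Hu Hv.
    repeat split; eexists; [apply is_derive_plane_i, Bx|apply is_derive_plane_j, Bx|apply Dc|apply Dd];
      auto; lra.
  - apply continuity_2d_pt_ext_loc with (fun u v => pd (pd f j) i (plane u v)).
    + exists (mkposreal _ Hd2). simpl. intros u v Hu Hv. symmetry. apply is_derive_unique, Dc; auto.
    + apply (cont_plane n r (pd (pd f j) i) x i j); auto.
  - apply continuity_2d_pt_ext_loc with (fun u v => pd (pd f i) j (plane u v)).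
    + exists (mkposreal _ Hd2). simpl. intros u v Hu Hv. symmetry. apply is_derive_unique, Dd; auto.
    + apply (cont_plane n r (pd (pd f i) j) x i j); auto.
Qed.

End Schwarz.

Lemma pd_comm n r f x i j : Ck n r 2 f -> box n r x -> (i < n)%nat -> (j < n)%nat ->
  pd (pd f j) i x = pd (pd f i) j x.
Proof.
  intros Hf Hx Hi Hj. destruct (Nat.eq_dec i j) as [->|Hij]; auto.
  apply (pd_comm_ne n r); auto.
Qed.

(** * Finite sums *)

Lemma sum_to_ext N f g : (forall i, (i < N)%nat -> f i = g i) -> sum_to N f = sum_to N g.
Proof. induction N; simpl; intros H; auto. rewrite IHN, H; auto. Qed.

Lemma sum_to_zero N f : (forall i, (i < N)%nat -> f i = 0) -> sum_to N f = 0.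
Proof. induction N; simpl; intros H; auto. rewrite IHN, H; auto; lra. Qed.

Definition kron (a b : nat) : R := if Nat.eqb a b then 1 else 0.

Lemma kron_sym a b : kron a b = kron b a.
Proof. unfold kron. destruct (Nat.eqb_spec a b); destruct (Nat.eqb_spec b a); auto; lia. Qed.

Lemma sum_to_indicator N p j c : sum_to N (fun a => if Nat.eqb (p + a) j then c else 0) =
  if andb (Nat.leb p j) (Nat.ltb j (p + N)) then c else 0.
Proof.
  induction N; simpl.
  - destruct (Nat.leb_spec p j); destruct (Nat.ltb_spec j (p + 0)); simpl; auto; lia.
  - rewrite IHN. destruct (Nat.eqb_spec (p + N) j); destruct (Nat.leb_spec p j);
      destruct (Nat.ltb_spec j (p + N)); destruct (Nat.ltb_spec j (p + S N)); simpl; try lra; lia.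
Qed.

Lemma sum_to_kron N f l : (l < N)%nat -> sum_to N (fun j => f j * kron j l) = f l.
Proof.
  intros H. rewrite (sum_to_ext N _ (fun j => if Nat.eqb (0 + j) l then f l else 0)).
  - rewrite sum_to_indicator. destruct (Nat.leb_spec 0 l); destruct (Nat.ltb_spec l (0 + N)); simpl; auto; lia.
  - intros i Hi. unfold kron. simpl. destruct (Nat.eqb_spec i l); subst; ring.
Qed.

Lemma sum_to_telescope N mu (D F : nat -> R) : (mu < N)%nat ->
  (forall nu, (mu < nu)%nat -> D nu = 0) -> D mu = F mu ->
  (forall nu, (nu < mu)%nat -> D nu = F nu - F (S nu)) -> sum_to N D = F O.
Proof.
  intros HN H1 H2 H3.
  assert (A : forall k, (k <= mu)%nat -> sum_to k D = F O - F k).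
  { induction k; simpl; intros Hk; [lra|]. rewrite IHk, H3 by lia. ring. }
  assert (B : forall k, (S mu <= k)%nat -> sum_to k D = F O).
  { induction k; intros Hk; [lia|]. simpl. destruct (Nat.eq_dec k mu) as [->|].
    - rewrite A, H2 by lia. ring.
    - rewrite IHk, H1 by lia. ring. }
  apply B; lia.
Qed.

Lemma sum_to_plus N f g : sum_to N (fun i => f i + g i) = sum_to N f + sum_to N g.
Proof. induction N; simpl; [ring|]. rewrite IHN. ring. Qed.

Lemma sum_to_scal N c f : sum_to N (fun i => c * f i) = c * sum_to N f.
Proof. induction N; simpl; [ring|]. rewrite IHN. ring. Qed.

Lemma sum_to_minus N f g : sum_to N (fun i => f i - g i) = sum_to N f - sum_to N g.
Proof. induction N; simpl; [ring|]. rewrite IHN. ring. Qed.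

Lemma sum_to_opp N f : sum_to N (fun i => - f i) = - sum_to N f.
Proof. induction N; simpl; [ring|]. rewrite IHN. ring. Qed.

Lemma sum_to_swap N M f : sum_to N (fun i => sum_to M (fun j => f i j)) =
  sum_to M (fun j => sum_to N (fun i => f i j)).
Proof. induction N; simpl; [now rewrite sum_to_zero|]. rewrite IHN, <- sum_to_plus. auto. Qed.

Lemma sum_to_add p m f : sum_to (p + m) f = sum_to p f + sum_to m (fun a => f (p + a)%nat).
Proof.
  induction m; simpl; [rewrite Nat.add_0_r; ring|].
  rewrite Nat.add_succ_r. simpl. rewrite IHm. ring.
Qed.

Lemma sum_to_le N f g : (forall i, (i < N)%nat -> f i <= g i) -> sum_to N f <= sum_to N g.
Proof.
  induction N; simpl; intros H; [lra|].
  apply Rplus_le_compat; [apply IHN; intros|]; apply H; lia.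
Qed.

Lemma sum_to_nonneg N f : (forall i, (i < N)%nat -> 0 <= f i) -> 0 <= sum_to N f.
Proof. intros H. rewrite <- (sum_to_zero N (fun _ => 0)) by auto. now apply sum_to_le. Qed.

(** * The explicit potential *)

Lemma has_partial_sq j i x : has_partial (fun q => q j ^ 2) i x (if Nat.eqb j i then 2 * x i else 0).
Proof.
  replace (fun q : point => q j ^ 2) with (fun q : point => q j * q j)
    by (apply functional_extensionality; intro; ring).
  replace (if Nat.eqb j i then 2 * x i else 0) with
    ((if Nat.eqb j i then 1 else 0) * x j + x j * (if Nat.eqb j i then 1 else 0))
    by (destruct (Nat.eqb_spec j i); subst; ring).
  apply has_partial_mult; apply has_partial_coord.
Qed.

Lemma has_partial_half_sq_sum c p m i x :
  has_partial (fun q => c / 2 * sum_to m (fun a => q (p + a)%nat ^ 2)) i x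
    (if andb (Nat.leb p i) (Nat.ltb i (p + m)) then c * x i else 0).
Proof.
  replace (if andb (Nat.leb p i) (Nat.ltb i (p + m)) then c * x i else 0) with
    (0 * sum_to m (fun a => x (p + a)%nat ^ 2)
     + c / 2 * sum_to m (fun a => if Nat.eqb (p + a) i then 2 * x i else 0))
    by (rewrite sum_to_indicator; destruct andb; field).
  apply (has_partial_mult (fun _ => c / 2) (fun q => sum_to m (fun a => q (p + a)%nat ^ 2)));
    [apply has_partial_const|].
  apply has_partial_sum. intros; apply has_partial_sq.
Qed.

Lemma Ck_half_sq_sum n r k c p m : Ck n r k (fun q => c / 2 * sum_to m (fun a => q (p + a)%nat ^ 2)).
Proof.
  apply Ck_mult; [apply Ck_const|]. apply Ck_sum. intros a Ha.
  replace (fun q : point => q (p + a)%nat ^ 2) with (fun q : point => q (p + a)%nat * q (p + a)%nat)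
    by (apply functional_extensionality; intro; ring).
  apply Ck_mult; apply Ck_coord.
Qed.

Lemma slot_int_pd_primitive n r (G U : point -> R) q nu : (nu < n)%nat -> box n r q ->
  Cont n r G -> Ck n r 1 U -> (forall x, box n r x -> G x = pd U nu x) ->
  slot_int nu G q = U (zero_below nu q) - U (zero_below (S nu) q).
Proof.
  intros Hnu Hq HG [_ [PU CU]] E.
  pose proof (between_0_in_interval (r nu) (q nu) (proj1 Hq nu Hnu)) as Hint.
  rewrite (slot_int_RInt n r nu G q HG Hq Hnu).
  rewrite (RInt_ext _ (fun t => pd U nu (slot_pt q nu t)))
    by (intros t Ht; apply E, box_slot_pt; auto; apply Hint; lra).
  rewrite <- slot_pt_top, <- slot_pt_bot.
  apply is_RInt_unique, (is_RInt_derive (V:=R_CompleteNormedModule) (fun t => U (slot_pt q nu t))).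
  - intros t Ht. pose proof (PU nu Hnu _ (box_slot_pt n r q nu t Hq Hnu (Hint t Ht))) as H.
    rewrite has_partial_is_derive, slot_pt_eq in H.
    eapply is_derive_ext; [|exact H]. intros s; simpl. now rewrite upd_slot_pt.
  - intros t Ht. apply cont_slot_line with n r; auto. apply (CU nu Hnu).
Qed.

Lemma slot_int_pd_zero n r G mu i : (forall i, (i < n)%nat -> 0 < r i) -> Cinf n r G ->
  (i < n)%nat -> slot_int_pd mu G i zero_pt = if Nat.eqb i mu then G zero_pt else 0.
Proof.
  intros Hr HG Hi. unfold slot_int_pd.
  destruct (Nat.ltb_spec i mu); [destruct (Nat.eqb_spec i mu); auto; lia|].
  destruct (Nat.eqb_spec i mu); [now rewrite zero_below_zero|].
  apply slot_int_zero with n r; auto; [|lia]. apply (Cinf_pd n r G i Hi HG O).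
Qed.

Section Potential.

Variables (n m : nat) (r : nat -> R) (u : nat -> point -> R).
Hypotheses (Hmn : (m < n)%nat) (Hu : forall mu, Cinf n r (u mu)).

Lemma Cinf_hhat varpi : Cinf n r (hhat_formula n m u varpi).
Proof.
  intros k. apply Ck_plus; [|apply Ck_half_sq_sum].
  apply Ck_sum. intros a Ha. apply (Ck_slot_int n r a k (u a)); auto. lia.
Qed.

Lemma has_partial_hhat varpi i x : box n r x -> (i < n)%nat ->
  has_partial (hhat_formula n m u varpi) i x
    (sum_to (n - m) (fun mu => slot_int_pd mu (u mu) i x)
     + (if Nat.leb (n - m) i then varpi * x i else 0)).
Proof.
  intros Hx Hi.
  replace (if Nat.leb (n - m) i then varpi * x i else 0) with
    (if andb (Nat.leb (n - m) i) (Nat.ltb i (n - m + m)) then varpi * x i else 0)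
    by (replace (n - m + m)%nat with n by lia; destruct (Nat.ltb_spec i n); try lia;
        now rewrite Bool.andb_true_r).
  apply has_partial_plus; [|apply has_partial_half_sq_sum].
  apply has_partial_sum. intros a Ha. apply has_partial_slot_int with n r; auto; [apply Hu|lia].
Qed.

Lemma hhat_solves varpi : integrable_cond n m r u -> is_solution n m r u (hhat_formula n m u varpi).
Proof.
  intros Hic. split; [apply smooth_on_Cinf, Cinf_hhat|].
  intros x Hx mu Hmu.
  rewrite (pd_unique _ _ _ _ (has_partial_hhat varpi mu x Hx ltac:(lia))).
  destruct (Nat.leb_spec (n - m) mu); [lia|]. rewrite Rplus_0_r, <- (zero_below_0 x) at 1.
  apply (sum_to_telescope (n - m) mu _ (fun nu => u mu (zero_below nu x))); auto.
  - intros nu Hnu. unfold slot_int_pd. destruct (Nat.ltb_spec mu nu); auto; lia.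
  - unfold slot_int_pd. destruct (Nat.ltb_spec mu mu); [lia|]. now rewrite Nat.eqb_refl.
  - intros nu Hnu. unfold slot_int_pd. destruct (Nat.ltb_spec mu nu); [lia|].
    destruct (Nat.eqb_spec mu nu); [lia|].
    apply (slot_int_pd_primitive n r); auto; try lia.
    + apply (Cinf_pd n r (u nu) mu ltac:(lia) (Hu nu) O).
    + apply (Hu mu 1%nat).
    + intros y Hy. apply Hic; auto. lia.
Qed.

Hypothesis (Hr : forall i, (i < n)%nat -> 0 < r i).

Lemma hhat_critical varpi : (forall mu, u mu zero_pt = 0) ->
  forall i, (i < n)%nat -> pd (hhat_formula n m u varpi) i zero_pt = 0.
Proof.
  intros Hu0 i Hi.
  rewrite (pd_unique _ _ _ _ (has_partial_hhat varpi i zero_pt (box_zero n r Hr) Hi)).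
  rewrite sum_to_zero; [destruct (Nat.leb (n - m) i); unfold zero_pt; ring|].
  intros nu Hnu. rewrite (slot_int_pd_zero n r) by auto. destruct (Nat.eqb i nu); auto.
Qed.

Lemma hhat_hessian_high varpi i j : (n - m <= j)%nat -> (j < n)%nat -> (i < n)%nat ->
  pd (pd (hhat_formula n m u varpi) j) i zero_pt =
  (if Nat.ltb i (n - m) then pd (u i) j zero_pt else 0) + varpi * kron j i.
Proof.
  intros Hj1 Hj2 Hi. pose proof (box_zero n r Hr) as Z.
  rewrite (pd_local n r _ (fun x => sum_to (n - m) (fun nu => slot_int nu (pd (u nu) j) x)
                                    + varpi * x j) i zero_pt); auto.
  2:{ intros x Hx. rewrite (pd_unique _ _ _ _ (has_partial_hhat varpi j x Hx Hj2)).
      destruct (Nat.leb_spec (n - m) j); [|lia]. f_equal. apply sum_to_ext. intros nu Hnu.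
      unfold slot_int_pd. destruct (Nat.ltb_spec j nu); [lia|].
      destruct (Nat.eqb_spec j nu); [lia|auto]. }
  apply pd_unique.
  replace ((if Nat.ltb i (n - m) then pd (u i) j zero_pt else 0) + varpi * kron j i) with
    (sum_to (n - m) (fun nu => slot_int_pd nu (pd (u nu) j) i zero_pt)
     + (0 * zero_pt j + varpi * kron j i)).
  - apply has_partial_plus; [|apply has_partial_mult; [apply has_partial_const|apply has_partial_coord]].
    apply has_partial_sum. intros nu Hnu. apply has_partial_slot_int with n r; auto; [|lia].
    apply (Cinf_pd n r (u nu) j Hj2 (Hu nu)).
  - f_equal; [|ring].
    rewrite (sum_to_ext _ _ (fun nu => if Nat.eqb (0 + nu) i then pd (u i) j zero_pt else 0)).
    + rewrite sum_to_indicator. destruct (Nat.ltb_spec i (n - m)); destruct (Nat.leb_spec 0 i);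
        destruct (Nat.ltb_spec i (0 + (n - m))); simpl; auto; lia.
    + intros nu Hnu. rewrite (slot_int_pd_zero n r); auto; [|apply Cinf_pd; auto].
      simpl. destruct (Nat.eqb_spec i nu); destruct (Nat.eqb_spec nu i); subst; auto; lia.
Qed.

End Potential.

Lemma solution_hessian_low n m r u hh i j : is_solution n m r u hh ->
  (forall i, (i < n)%nat -> 0 < r i) -> (j < n - m)%nat -> (i < n)%nat ->
  pd (pd hh j) i zero_pt = pd (u j) i zero_pt.
Proof. intros [_ Hs] Hr Hj Hi. apply pd_local with n r; auto. apply box_zero; auto. Qed.

(** * Positive definite quadratic forms *)

Definition quad (k : nat) (A : nat -> nat -> R) (v : nat -> R) : R :=
  sum_to k (fun i => sum_to k (fun j => v i * A i j * v j)).

Definition sqnorm (k : nat) (v : nat -> R) : R := sum_to k (fun i => v i * v i).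

Definition unit_vec (l : nat) : nat -> R := fun i => kron i l.

Lemma sqnorm_nonneg k v : 0 <= sqnorm k v.
Proof. apply sum_to_nonneg. intros; apply Rle_0_sqr. Qed.

Lemma sq_le_sqnorm k v i : (i < k)%nat -> v i * v i <= sqnorm k v.
Proof.
  intros Hi. unfold sqnorm. induction k; simpl; [lia|].
  pose proof (sum_to_nonneg k (fun i => v i * v i) ltac:(intros; apply Rle_0_sqr)).
  pose proof (Rle_0_sqr (v k)). unfold Rsqr in *.
  destruct (Nat.eq_dec i k) as [->|]; [lra|]. pose proof (IHk ltac:(lia)). lra.
Qed.

Lemma sqnorm_pos k v : (exists i, (i < k)%nat /\ v i <> 0) -> 0 < sqnorm k v.
Proof.
  intros [i [Hi Hv]]. pose proof (sq_le_sqnorm k v i Hi).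
  pose proof (Rsqr_pos_lt _ Hv). unfold Rsqr in *. lra.
Qed.

Lemma sqnorm_eq_0 k v : sqnorm k v = 0 -> forall i, (i < k)%nat -> v i = 0.
Proof. intros H i Hi. pose proof (sq_le_sqnorm k v i Hi). rewrite H in *. nra. Qed.

Lemma sqnorm_scal k c v : sqnorm k (fun i => c * v i) = c * c * sqnorm k v.
Proof. unfold sqnorm. rewrite <- sum_to_scal. apply sum_to_ext. intros; ring. Qed.

Lemma quad_ext k A B v w : (forall i j, (i < k)%nat -> (j < k)%nat -> A i j = B i j) ->
  (forall i, (i < k)%nat -> v i = w i) -> quad k A v = quad k B w.
Proof.
  intros H1 H2. apply sum_to_ext; intros i Hi. apply sum_to_ext; intros j Hj.
  rewrite H1, !H2; auto.
Qed.

Lemma quad_scal k A c v : quad k A (fun i => c * v i) = c * c * quad k A v.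
Proof.
  unfold quad. rewrite <- sum_to_scal. apply sum_to_ext. intros i Hi.
  rewrite <- sum_to_scal. apply sum_to_ext. intros; ring.
Qed.

Lemma quad_unit_vec k A l : (l < k)%nat -> quad k A (unit_vec l) = A l l.
Proof.
  intros Hl. unfold quad, unit_vec.
  rewrite (sum_to_ext k _ (fun i => A i l * kron i l)); [apply (sum_to_kron k (fun i => A i l)); auto|].
  intros i Hi. transitivity (sum_to k (fun j => (kron i l * A i j) * kron j l));
    [apply sum_to_ext; intros; ring|].
  rewrite (sum_to_kron k (fun j => kron i l * A i j)) by auto. ring.
Qed.

Lemma quad_shift k A mu v :
  quad k (fun i j => A i j - mu * kron i j) v = quad k A v - mu * sqnorm k v.
Proof.
  unfold quad, sqnorm. rewrite <- sum_to_scal, <- sum_to_minus. apply sum_to_ext. intros i Hi.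
  rewrite (sum_to_ext k _ (fun j => v i * A i j * v j - (mu * v i * v j) * kron j i)).
  - rewrite sum_to_minus, (sum_to_kron k (fun j => mu * v i * v j) i Hi). ring.
  - intros j Hj. rewrite (kron_sym i j). ring.
Qed.

Lemma quad_eigenvector k A x lam : (forall i, (i < k)%nat -> sum_to k (fun j => A i j * x j) = lam * x i) ->
  quad k A x = lam * sqnorm k x.
Proof.
  intros H. unfold quad, sqnorm. rewrite <- sum_to_scal. apply sum_to_ext. intros i Hi.
  rewrite (sum_to_ext k _ (fun j => x i * (A i j * x j))) by (intros; ring).
  rewrite sum_to_scal, H by auto. ring.
Qed.

Lemma discriminant_nonpos A B C : (forall t, 0 <= A * t * t - 2 * C * t + B) -> 0 <= A ->
  C * C <= A * B.
Proof.
  intros H HA. destruct (Req_dec A 0) as [->|HA'].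
  - destruct (Req_dec C 0) as [->|HC]; [lra|].
    specialize (H ((B + 1) / (2 * C))). exfalso.
    replace (0 * ((B + 1) / (2 * C)) * ((B + 1) / (2 * C)) - 2 * C * ((B + 1) / (2 * C)) + B)
      with (-1) in H by (field; auto). lra.
  - specialize (H (C / A)).
    replace (A * (C / A) * (C / A) - 2 * C * (C / A) + B) with ((A * B - C * C) / A) in H
      by (field; auto).
    apply Rmult_le_compat_r with (r := A) in H; [|lra].
    unfold Rdiv in H. rewrite Rmult_assoc, Rinv_l in H; lra.
Qed.

Lemma cauchy_schwarz N a b :
  sum_to N (fun i => a i * b i) * sum_to N (fun i => a i * b i) <= sqnorm N a * sqnorm N b.
Proof.
  apply discriminant_nonpos; [|apply sqnorm_nonneg]. intros t.
  replace (sqnorm N a * t * t - 2 * sum_to N (fun i => a i * b i) * t + sqnorm N b)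
    with (sum_to N (fun i => (a i * t - b i) * (a i * t - b i))).
  - apply sum_to_nonneg. intros; apply Rle_0_sqr.
  - rewrite (sum_to_ext N _ (fun i => (t * t) * (a i * a i) - ((2 * t) * (a i * b i) - b i * b i)))
      by (intros; ring).
    unfold sqnorm. rewrite !sum_to_minus, !sum_to_scal. ring.
Qed.

Definition schur_compl (k : nat) (A : nat -> nat -> R) : nat -> nat -> R :=
  fun i j => A i j - A i k * A k j / A k k.

Definition row_dot (k : nat) (A : nat -> nat -> R) (v : nat -> R) : R :=
  sum_to k (fun j => A k j * v j).

Lemma quad_succ k A v : quad (S k) A v = quad k A v + sum_to k (fun i => v i * A i k * v k)
   + sum_to k (fun j => v k * A k j * v j) + v k * A k k * v k.
Proof. unfold quad. simpl. rewrite sum_to_plus. ring. Qed.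

(* Completing the square in the last coordinate. *)
Lemma quad_succ_schur k A v : (forall i, (i < k)%nat -> A i k = A k i) -> A k k <> 0 ->
  quad (S k) A v = quad k (schur_compl k A) v
    + A k k * (v k + row_dot k A v / A k k) * (v k + row_dot k A v / A k k).
Proof.
  intros Hsym Ha. rewrite quad_succ.
  assert (E1 : quad k (schur_compl k A) v = quad k A v - row_dot k A v * row_dot k A v / A k k).
  { unfold quad, schur_compl.
    replace (row_dot k A v * row_dot k A v / A k k) with
      (sum_to k (fun i => v i * A i k / A k k * row_dot k A v)).
    2:{ rewrite (sum_to_ext k _ (fun i => (row_dot k A v / A k k) * (A k i * v i)))
          by (intros i Hi; rewrite Hsym by auto; field; auto).
        rewrite sum_to_scal. unfold row_dot. field; auto. }
    rewrite <- sum_to_minus. apply sum_to_ext. intros i Hi.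
    rewrite (sum_to_ext k _ (fun j => v i * A i j * v j - (v i * A i k / A k k) * (A k j * v j)))
      by (intros; field; auto).
    now rewrite sum_to_minus, sum_to_scal. }
  assert (E2 : sum_to k (fun i => v i * A i k * v k) = v k * row_dot k A v).
  { unfold row_dot. rewrite <- sum_to_scal. apply sum_to_ext. intros i Hi. rewrite Hsym; auto. ring. }
  assert (E3 : sum_to k (fun j => v k * A k j * v j) = v k * row_dot k A v).
  { unfold row_dot. rewrite <- sum_to_scal. apply sum_to_ext. intros; ring. }
  rewrite E1, E2, E3. field. auto.
Qed.

Lemma posdef_diag_pos k A l : posdef k A -> (l < k)%nat -> 0 < A l l.
Proof.
  intros [_ Hpos] Hl. rewrite <- (quad_unit_vec k A l) by auto. apply Hpos.
  exists l. split; auto. unfold unit_vec, kron. rewrite Nat.eqb_refl. lra.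
Qed.

Lemma posdef_schur_compl k A : posdef (S k) A -> posdef k (schur_compl k A).
Proof.
  intros HA. pose proof (posdef_diag_pos (S k) A k HA ltac:(lia)) as Ha.
  destruct HA as [Hsym Hpos].
  split.
  - intros i j Hi Hj. unfold schur_compl. rewrite (Hsym i j), (Hsym i k), (Hsym k j) by lia. field. lra.
  - intros v Hv. set (w := fun i => if Nat.eqb i k then - row_dot k A v / A k k else v i).
    assert (Ew : forall i, (i < k)%nat -> w i = v i).
    { intros i Hi. unfold w. destruct (Nat.eqb_spec i k); auto; lia. }
    assert (Hq : 0 < quad (S k) A w).
    { apply Hpos. destruct Hv as [i [Hi Hvi]]. exists i. split; [lia|]. rewrite Ew; auto. }
    rewrite quad_succ_schur in Hq; [|intros; apply Hsym; lia|lra].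
    replace (row_dot k A w) with (row_dot k A v) in Hq
      by (unfold row_dot; apply sum_to_ext; intros; rewrite Ew; auto).
    unfold w at 2 3 in Hq. rewrite Nat.eqb_refl in Hq.
    rewrite (quad_ext k _ (schur_compl k A) w v) in Hq; auto.
    replace (A k k * (- row_dot k A v / A k k + row_dot k A v / A k k)
      * (- row_dot k A v / A k k + row_dot k A v / A k k)) with 0 in Hq by (field; lra).
    change (0 < quad k (schur_compl k A) v). lra.
Qed.

Lemma sqnorm_succ_le k A v : 0 < A k k ->
  sqnorm (S k) v <= (1 + 2 * sqnorm k (A k) / (A k k * A k k)) * sqnorm k v
    + 2 * ((v k + row_dot k A v / A k k) * (v k + row_dot k A v / A k k)).
Proof.
  intros Ha. set (y := v k + row_dot k A v / A k k). set (s := row_dot k A v).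
  assert (Hcs : s * s <= sqnorm k (A k) * sqnorm k v) by apply cauchy_schwarz.
  assert (Hvk : v k * v k <= 2 * (y * y) + 2 * (s / A k k) * (s / A k k)).
  { replace (v k) with (y - s / A k k) by (unfold y, s; ring).
    pose proof (Rle_0_sqr (y + s / A k k)). unfold Rsqr in *. lra. }
  assert (Hsa : (s / A k k) * (s / A k k) <= sqnorm k (A k) * sqnorm k v / (A k k * A k k)).
  { replace ((s / A k k) * (s / A k k)) with (s * s / (A k k * A k k)) by (field; lra).
    apply Rmult_le_compat_r; auto. left. apply Rinv_0_lt_compat. nra. }
  unfold sqnorm at 1. simpl. fold (sqnorm k v).
  replace ((1 + 2 * sqnorm k (A k) / (A k k * A k k)) * sqnorm k v) with
    (sqnorm k v + 2 * (sqnorm k (A k) * sqnorm k v / (A k k * A k k))) by (field; lra).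
  lra.
Qed.

Lemma posdef_coercive k : forall A, posdef k A ->
  exists c, 0 < c /\ forall v, c * sqnorm k v <= quad k A v.
Proof.
  induction k; intros A HA.
  - exists 1. split; [lra|]. intros v. unfold sqnorm, quad. simpl. lra.
  - destruct (IHk _ (posdef_schur_compl k A HA)) as [c' [Hc' Hlow]].
    pose proof (posdef_diag_pos (S k) A k HA ltac:(lia)) as Ha.
    destruct HA as [Hsym _].
    set (beta := 1 + 2 * sqnorm k (A k) / (A k k * A k k)).
    assert (Hb : 1 <= beta).
    { unfold beta. pose proof (sqnorm_nonneg k (A k)).
      assert (0 <= 2 * sqnorm k (A k) / (A k k * A k k)); [|lra].
      unfold Rdiv. apply Rmult_le_pos; [lra|]. left. apply Rinv_0_lt_compat. nra. }
    set (c := Rmin (c' / beta) (A k k / 2)).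
    assert (Hc0 : 0 < c) by (apply Rmin_pos; [apply Rdiv_lt_0_compat|]; lra).
    assert (Hc1 : c * beta <= c').
    { apply Rmult_le_reg_r with (/ beta); [apply Rinv_0_lt_compat; lra|].
      rewrite Rmult_assoc, Rinv_r, Rmult_1_r by lra. apply Rmin_l. }
    assert (Hc2 : 2 * c <= A k k) by (pose proof (Rmin_r (c' / beta) (A k k / 2)) as Hm; fold c in Hm; lra).
    exists c. split; auto. intros v.
    rewrite quad_succ_schur; [|intros; apply Hsym; lia|lra].
    pose proof (sqnorm_succ_le k A v Ha) as HN. fold beta in HN.
    set (y := v k + row_dot k A v / A k k) in *.
    specialize (Hlow v). pose proof (sqnorm_nonneg k v). pose proof (Rle_0_sqr y). unfold Rsqr in *.
    assert (c * sqnorm (S k) v <= c * (beta * sqnorm k v + 2 * (y * y))) by (apply Rmult_le_compat_l; lra).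
    assert (c * beta * sqnorm k v <= c' * sqnorm k v) by (apply Rmult_le_compat_r; lra).
    assert (2 * c * (y * y) <= A k k * (y * y)) by (apply Rmult_le_compat_r; lra).
    nra.
Qed.

Definition bilin (k : nat) (A : nat -> nat -> R) (x y : nat -> R) : R :=
  sum_to k (fun i => sum_to k (fun j => x i * A i j * y j)).

Lemma quad_add_scal k A x y t : quad k A (fun i => x i + t * y i) =
  quad k A x + t * (bilin k A x y + bilin k A y x) + t * t * quad k A y.
Proof.
  unfold quad, bilin.
  rewrite (sum_to_ext k _ (fun i => sum_to k (fun j => x i * A i j * x j) +
      (t * (sum_to k (fun j => x i * A i j * y j) + sum_to k (fun j => y i * A i j * x j)) +
       t * t * sum_to k (fun j => y i * A i j * y j)))).
  - rewrite !sum_to_plus, !sum_to_scal, !sum_to_plus. ring.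
  - intros i Hi. rewrite <- !sum_to_scal, <- !sum_to_plus, <- !sum_to_scal, <- !sum_to_plus.
    apply sum_to_ext. intros; ring.
Qed.

Lemma bilin_unit_vec_r k A x l : (l < k)%nat -> bilin k A x (unit_vec l) = sum_to k (fun i => x i * A i l).
Proof.
  intros Hl. unfold bilin, unit_vec. apply sum_to_ext. intros i Hi.
  transitivity (sum_to k (fun j => (x i * A i j) * kron j l)); [apply sum_to_ext; intros; ring|].
  apply (sum_to_kron k (fun j => x i * A i j) l Hl).
Qed.

Lemma bilin_unit_vec_l k A x l : (l < k)%nat ->
  bilin k A (unit_vec l) x = sum_to k (fun j => A l j * x j).
Proof.
  intros Hl. unfold bilin, unit_vec.
  rewrite (sum_to_ext k _ (fun i => sum_to k (fun j => A i j * x j) * kron i l)).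
  - apply (sum_to_kron k (fun i => sum_to k (fun j => A i j * x j)) l Hl).
  - intros i Hi. rewrite Rmult_comm, <- sum_to_scal. apply sum_to_ext. intros; ring.
Qed.

Lemma psd_kernel k A x : (forall i j, (i < k)%nat -> (j < k)%nat -> A i j = A j i) ->
  (forall v, 0 <= quad k A v) -> quad k A x = 0 ->
  forall l, (l < k)%nat -> sum_to k (fun j => A l j * x j) = 0.
Proof.
  intros Hs Hp Hx l Hl. set (b := sum_to k (fun j => A l j * x j)).
  assert (Hb1 : bilin k A x (unit_vec l) = b).
  { rewrite bilin_unit_vec_r by auto. apply sum_to_ext. intros j Hj. rewrite Hs by auto. ring. }
  assert (Hb2 : bilin k A (unit_vec l) x = b) by (apply bilin_unit_vec_l; auto).
  assert (Hll : 0 <= A l l) by (rewrite <- (quad_unit_vec k A l Hl); apply Hp).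
  assert (Hdisc : (- b) * (- b) <= A l l * 0).
  { apply discriminant_nonpos; auto. intros t.
    pose proof (Hp (fun i => x i + t * unit_vec l i)) as H.
    rewrite quad_add_scal, Hx, Hb1, Hb2, quad_unit_vec in H by auto. lra. }
  nra.
Qed.

Lemma quad_ge_neg_bound k A : exists B, forall v, sqnorm k v = 1 -> - B <= quad k A v.
Proof.
  exists (sum_to k (fun i => sum_to k (fun j => Rabs (A i j)))). intros v Hv.
  assert (Hv1 : forall i, (i < k)%nat -> Rabs (v i) <= 1).
  { intros i Hi. pose proof (sq_le_sqnorm k v i Hi). rewrite Hv in *.
    unfold Rabs; destruct Rcase_abs; nra. }
  unfold quad. rewrite <- sum_to_opp. apply sum_to_le. intros i Hi.
  rewrite <- sum_to_opp. apply sum_to_le. intros j Hj.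
  assert (Rabs (v i * A i j * v j) <= Rabs (A i j)).
  { rewrite !Rabs_mult. pose proof (Rabs_pos (v i)). pose proof (Rabs_pos (v j)).
    pose proof (Rabs_pos (A i j)). pose proof (Hv1 i Hi). pose proof (Hv1 j Hj).
    replace (Rabs (A i j)) with (1 * Rabs (A i j) * 1) at 2 by ring.
    apply Rmult_le_compat; auto; [apply Rmult_le_pos; auto|apply Rmult_le_compat; auto; lra]. }
  pose proof (Rle_abs (- (v i * A i j * v j))). rewrite Rabs_Ropp in *. lra.
Qed.

Lemma quad_glb_lower_bound k A : (1 <= k)%nat -> exists mu,
  (forall v, mu * sqnorm k v <= quad k A v) /\
  (forall c, (forall v, c * sqnorm k v <= quad k A v) -> c <= mu).
Proof.
  intros Hk. set (E := fun z => exists v, sqnorm k v = 1 /\ z = - quad k A v).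
  assert (HB : bound E).
  { destruct (quad_ge_neg_bound k A) as [B HB]. exists B. intros z [v [Hv ->]].
    specialize (HB v Hv). lra. }
  assert (Hne : exists z, E z).
  { exists (- quad k A (unit_vec 0)), (unit_vec 0). split; auto.
    unfold sqnorm. rewrite (sum_to_ext k _ (fun i => 1 * kron i 0)).
    - apply (sum_to_kron k (fun _ => 1) 0). lia.
    - intros i Hi. unfold unit_vec, kron. destruct (Nat.eqb i 0); ring. }
  destruct (completeness E HB Hne) as [mlub [Hub Hlub]].
  exists (- mlub). split.
  - intro v. destruct (Req_dec (sqnorm k v) 0) as [H0|H0].
    + rewrite H0, (quad_ext k A A v (fun _ => 0)); auto; [|apply sqnorm_eq_0; auto].
      unfold quad. rewrite sum_to_zero; [lra|]. intros i Hi. apply sum_to_zero. intros; ring.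
    + pose proof (sqnorm_nonneg k v) as HN. set (s := sqrt (sqnorm k v)).
      assert (Hs0 : 0 < s) by (apply sqrt_lt_R0; lra).
      assert (Hss : s * s = sqnorm k v) by (apply sqrt_sqrt; lra).
      assert (Hw : E (- quad k A (fun i => / s * v i))).
      { exists (fun i => / s * v i). split; auto. rewrite sqnorm_scal, <- Hss. field. lra. }
      apply Hub in Hw. rewrite quad_scal in Hw.
      apply Rmult_le_reg_r with (/ sqnorm k v); [apply Rinv_0_lt_compat; lra|].
      replace (/ s * / s) with (/ sqnorm k v) in Hw by (rewrite <- Hss; field; lra).
      replace (- mlub * sqnorm k v * / sqnorm k v) with (- mlub) by (field; lra). lra.
  - intros c Hc. assert (Hup : is_upper_bound E (- c)).
    { intros z [v [Hv ->]]. specialize (Hc v). rewrite Hv in Hc. lra. }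
    apply Hlub in Hup. lra.
Qed.

(* If the infimum [mu] of the Rayleigh quotient were not an eigenvalue, [A - mu] would be
   positive definite, hence coercive, and [mu] would not be the greatest lower bound. *)
Lemma least_eigenvalue_le_quad k A lam : (1 <= k)%nat ->
  (forall i j, (i < k)%nat -> (j < k)%nat -> A i j = A j i) ->
  least_eigenvalue k A lam -> forall v, lam * sqnorm k v <= quad k A v.
Proof.
  intros Hk Hs [_ Hleast].
  destruct (quad_glb_lower_bound k A Hk) as [mu [Hlow Hglb]].
  set (A' := fun i j => A i j - mu * kron i j).
  assert (Hsym' : forall i j, (i < k)%nat -> (j < k)%nat -> A' i j = A' j i)
    by (intros; unfold A'; rewrite Hs, kron_sym by auto; auto).
  assert (Hpsd : forall v, 0 <= quad k A' v)
    by (intros v; unfold A'; rewrite quad_shift; specialize (Hlow v); lra).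
  destruct (classic (exists x, (exists i, (i < k)%nat /\ x i <> 0) /\
      forall l, (l < k)%nat -> sum_to k (fun j => A' l j * x j) = 0)) as [[x [Hx1 Hx2]] | Hno].
  - assert (Hlm : lam <= mu).
    { apply Hleast. exists x. split; auto. intros l Hl. specialize (Hx2 l Hl). unfold A' in Hx2.
      rewrite (sum_to_ext k _ (fun j => A l j * x j - mu * x j * kron j l)) in Hx2
        by (intros j Hj; rewrite (kron_sym l j); ring).
      rewrite sum_to_minus, (sum_to_kron k (fun j => mu * x j) l Hl) in Hx2. lra. }
    intros v. pose proof (sqnorm_nonneg k v). specialize (Hlow v). nra.
  - exfalso.
    assert (Hpd : posdef k A').
    { split; auto. intros x Hx. destruct (Rle_lt_or_eq_dec _ _ (Hpsd x)) as [H|H]; auto.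
      exfalso. apply Hno. exists x. split; auto. apply psd_kernel; auto. }
    destruct (posdef_coercive k A' Hpd) as [c [Hc Hcoer]].
    assert (Hmc : mu + c <= mu).
    { apply Hglb. intros v. specialize (Hcoer v). unfold A' in Hcoer.
      rewrite quad_shift in Hcoer. lra. }
    lra.
Qed.

Lemma quad_zero_tail p q A v : (forall a, v (p + a)%nat = 0) -> quad (p + q) A v = quad p A v.
Proof.
  intros H. unfold quad. rewrite sum_to_add.
  rewrite (sum_to_zero q (fun a => sum_to (p + q) (fun j => v (p + a)%nat * A (p + a)%nat j * v j)))
    by (intros a Ha; apply sum_to_zero; intros j Hj; rewrite H; ring).
  rewrite Rplus_0_r. apply sum_to_ext. intros i Hi. rewrite sum_to_add.
  rewrite (sum_to_zero q (fun a => v i * A i (p + a)%nat * v (p + a)%nat))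
    by (intros b Hb; rewrite H; ring).
  ring.
Qed.

Lemma posdef_leading_block p k H M : (p <= k)%nat -> posdef k H ->
  (forall i j, (i < p)%nat -> (j < p)%nat -> H i j = M i j) -> posdef p M.
Proof.
  intros Hpk [Hs Hp] E. split.
  - intros i j Hi Hj. rewrite <- !E by auto. apply Hs; lia.
  - intros v [i [Hi Hv]]. set (v' := fun i => if Nat.ltb i p then v i else 0).
    assert (Hq : 0 < quad k H v').
    { apply Hp. exists i. split; [lia|]. unfold v'. destruct (Nat.ltb_spec i p); auto; lia. }
    replace k with (p + (k - p))%nat in Hq by lia.
    rewrite quad_zero_tail in Hq by (intros a; unfold v'; destruct (Nat.ltb_spec (p + a) p); auto; lia).
    rewrite (quad_ext p H M v' v) in Hq; auto.
    intros j Hj. unfold v'. destruct (Nat.ltb_spec j p); auto; lia.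
Qed.

(* The Hessian at [0] of (ii), with [B mu a = d u_mu / d q^(p+a)]. *)
Definition block_hessian p (M B : nat -> nat -> R) varpi : nat -> nat -> R := fun i j =>
  if Nat.ltb j p then (if Nat.ltb i p then M i j else B j (i - p)%nat)
  else (if Nat.ltb i p then B i (j - p)%nat else varpi * kron j i).

Lemma quad_block_hessian p m M B varpi v :
  quad (p + m) (block_hessian p M B varpi) v = quad p M v
    + 2 * sum_to p (fun i => v i * sum_to m (fun a => B i a * v (p + a)%nat))
    + varpi * sqnorm m (fun a => v (p + a)%nat).
Proof.
  unfold quad. rewrite sum_to_add.
  assert (E1 : forall i, (i < p)%nat ->
      sum_to (p + m) (fun j => v i * block_hessian p M B varpi i j * v j) =
      sum_to p (fun j => v i * M i j * v j) + v i * sum_to m (fun a => B i a * v (p + a)%nat)).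
  { intros i Hi. rewrite sum_to_add. f_equal.
    - apply sum_to_ext. intros j Hj. unfold block_hessian.
      destruct (Nat.ltb_spec j p); destruct (Nat.ltb_spec i p); auto; lia.
    - rewrite <- sum_to_scal. apply sum_to_ext. intros a Ha. unfold block_hessian.
      destruct (Nat.ltb_spec (p + a) p); destruct (Nat.ltb_spec i p); try lia.
      replace (p + a - p)%nat with a by lia. ring. }
  assert (E2 : forall a, (a < m)%nat ->
      sum_to (p + m) (fun j => v (p + a)%nat * block_hessian p M B varpi (p + a)%nat j * v j) =
      sum_to p (fun j => v (p + a)%nat * B j a * v j) + varpi * (v (p + a)%nat * v (p + a)%nat)).
  { intros a Ha. rewrite sum_to_add. f_equal.
    - apply sum_to_ext. intros j Hj. unfold block_hessian.
      destruct (Nat.ltb_spec j p); destruct (Nat.ltb_spec (p + a) p); try lia.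
      now replace (p + a - p)%nat with a by lia.
    - rewrite (sum_to_ext m _ (fun b => (varpi * v (p + a)%nat * v (p + b)%nat) * kron b a)).
      + rewrite (sum_to_kron m (fun b => varpi * v (p + a)%nat * v (p + b)%nat) a Ha). ring.
      + intros b Hb. unfold block_hessian, kron.
        destruct (Nat.ltb_spec (p + b) p); destruct (Nat.ltb_spec (p + a) p); try lia.
        destruct (Nat.eqb_spec (p + b) (p + a)); destruct (Nat.eqb_spec b a); try lia; ring. }
  rewrite (sum_to_ext p _ _ E1), (sum_to_ext m _ _ E2), !sum_to_plus.
  unfold sqnorm. rewrite sum_to_scal, (sum_to_swap m p (fun a j => v (p + a)%nat * B j a * v j)).
  replace (sum_to p (fun j => sum_to m (fun a => v (p + a)%nat * B j a * v j))) with
    (sum_to p (fun i => v i * sum_to m (fun a => B i a * v (p + a)%nat)));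
    [ring|apply sum_to_ext; intros j Hj; rewrite <- sum_to_scal; apply sum_to_ext; intros; ring].
Qed.

(* Read [Qx = x^T M x], [Nx = |x|^2], [Ny = |y|^2], [Nz = |B y|^2 <= S |y|^2], [X = <x, B y>]:
   the cross term is absorbed by the coercivity constant [c] of [M] once [varpi > S / c]. *)
Lemma absorb_cross_term Qx Nx Ny Nz X S c varpi : 0 < c -> c * Nx <= Qx ->
  0 <= c * c * Nx + 2 * c * X + Nz -> Nz <= S * Ny -> varpi > / c * S ->
  0 <= Nx -> 0 <= Ny -> (Ny = 0 -> X = 0) -> (0 < Nx \/ 0 < Ny) -> 0 < Qx + 2 * X + varpi * Ny.
Proof.
  intros Hc HQ HX HZ Hv HNx HNy HX0 Hpos.
  assert (K1 : - (Nz / c) - c * Nx <= 2 * X).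
  { apply Rmult_le_reg_l with c; auto.
    replace (c * (- (Nz / c) - c * Nx)) with (- Nz - c * c * Nx) by (field; lra). lra. }
  assert (K2 : Nz / c <= S * Ny / c)
    by (apply Rmult_le_compat_r; [left; apply Rinv_0_lt_compat|]; auto).
  destruct (Rle_lt_or_eq_dec _ _ HNy) as [Hy|Hy].
  - assert (K3 : S * Ny / c < varpi * Ny).
    { replace (S * Ny / c) with ((/ c * S) * Ny) by (field; lra). apply Rmult_lt_compat_r; auto. }
    lra.
  - rewrite <- Hy, HX0 by auto. destruct Hpos as [Hx|]; [nra|lra].
Qed.

Lemma posdef_block_hessian p m M B varpi c :
  (forall i j, (i < p)%nat -> (j < p)%nat -> M i j = M j i) -> 0 < c ->
  (forall x, c * sqnorm p x <= quad p M x) ->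
  varpi > / c * sum_to p (fun mu => sum_to m (fun a => B mu a * B mu a)) ->
  posdef (p + m) (block_hessian p M B varpi).
Proof.
  intros Hs Hc Hlow Hv. split.
  - intros i j Hi Hj. unfold block_hessian.
    destruct (Nat.ltb_spec j p); destruct (Nat.ltb_spec i p); auto. now rewrite kron_sym.
  - intros v Hv0. change (0 < quad (p + m) (block_hessian p M B varpi) v).
    rewrite quad_block_hessian.
    set (y := fun a => v (p + a)%nat). set (z := fun i => sum_to m (fun a => B i a * y a)).
    change (0 < quad p M v + 2 * sum_to p (fun i => v i * z i) + varpi * sqnorm m y).
    apply (absorb_cross_term _ (sqnorm p v) _ (sqnorm p z) _
      (sum_to p (fun mu => sum_to m (fun a => B mu a * B mu a))) c); auto;
      try apply sqnorm_nonneg.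
    + replace (c * c * sqnorm p v + 2 * c * sum_to p (fun i => v i * z i) + sqnorm p z)
        with (sum_to p (fun i => (c * v i + z i) * (c * v i + z i)));
        [apply sum_to_nonneg; intros; apply Rle_0_sqr|].
      unfold sqnorm.
      rewrite (sum_to_ext p _ (fun i => (c * c) * (v i * v i) + ((2 * c) * (v i * z i) + z i * z i)))
        by (intros; ring).
      rewrite !sum_to_plus, !sum_to_scal. ring.
    + unfold sqnorm at 1. rewrite Rmult_comm, <- sum_to_scal.
      apply sum_to_le. intros i Hi. unfold z.
      rewrite (Rmult_comm (sqnorm m y)). apply (cauchy_schwarz m (fun a => B i a) y).
    + intros Hy. apply sum_to_zero. intros i Hi. unfold z.
      rewrite sum_to_zero; [ring|]. intros a Ha. rewrite (sqnorm_eq_0 m y Hy a Ha). ring.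
    + destruct Hv0 as [i [Hi Hvi]]. destruct (Nat.ltb_spec i p).
      * left. apply sqnorm_pos. exists i. auto.
      * right. apply sqnorm_pos. exists (i - p)%nat. split; [lia|]. unfold y.
        now replace (p + (i - p))%nat with i by lia.
Qed.

Lemma hhat_hessian_block n m r u varpi : (m < n)%nat -> (forall mu, Cinf n r (u mu)) ->
  (forall i, (i < n)%nat -> 0 < r i) -> integrable_cond n m r u ->
  forall i j, (i < n)%nat -> (j < n)%nat ->
  hessian (hhat_formula n m u varpi) zero_pt i j =
  block_hessian (n - m) (fun mu nu => pd (u nu) mu zero_pt)
    (fun mu a => pd (u mu) (n - m + a)%nat zero_pt) varpi i j.
Proof.
  intros Hmn Hu Hr Hic i j Hi Hj. unfold hessian, block_hessian.
  destruct (Nat.ltb_spec j (n - m)).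
  - rewrite (solution_hessian_low n m r u _ i j (hhat_solves n m r u Hmn Hu varpi Hic) Hr) by lia.
    destruct (Nat.ltb_spec i (n - m)); auto. now replace (n - m + (i - (n - m)))%nat with i by lia.
  - rewrite (hhat_hessian_high n m r u Hmn Hu Hr varpi i j) by lia.
    unfold kron. destruct (Nat.ltb_spec i (n - m)); [|ring].
    replace (n - m + (j - (n - m)))%nat with j by lia.
    destruct (Nat.eqb_spec j i); [lia|ring].
Qed.

Lemma hhat_critical_posdef n m r u varpi c : (m < n)%nat -> (forall mu, Cinf n r (u mu)) ->
  (forall i, (i < n)%nat -> 0 < r i) -> (forall mu, u mu zero_pt = 0) ->
  integrable_cond n m r u -> 0 < c ->
  (forall x, c * sqnorm (n - m) x <= quad (n - m) (fun mu nu => pd (u nu) mu zero_pt) x) ->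
  varpi > / c * sum_to (n - m) (fun mu => sum_to m (fun a => (pd (u mu) (n - m + a)%nat zero_pt) ^ 2)) ->
  critical_posdef n (hhat_formula n m u varpi) zero_pt.
Proof.
  intros Hmn Hu Hr Hu0 Hic Hc Hlow Hv. split; [apply hhat_critical with r; auto|].
  assert (HB : posdef (n - m + m) (block_hessian (n - m) (fun mu nu => pd (u nu) mu zero_pt)
      (fun mu a => pd (u mu) (n - m + a)%nat zero_pt) varpi)).
  { apply posdef_block_hessian with c; auto.
    - intros i j Hi Hj. apply Hic; auto. apply (box_zero n r); auto.
    - rewrite (sum_to_ext (n - m) _ (fun mu => sum_to m (fun a => (pd (u mu) (n - m + a)%nat zero_pt) ^ 2)));
        auto.
      intros i Hi. apply sum_to_ext. intros; ring. }
  replace (n - m + m)%nat with n in HB by lia.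
  apply (posdef_leading_block n n _ _ (le_n n) HB). intros i j Hi Hj.
  symmetry. apply (hhat_hessian_block n m r); auto.
Qed.

Lemma Cinf_u_fun n m r h P K mu : Cinf n r h -> (forall k tau, Cinf n r (P k tau)) ->
  (forall tau nu, Cinf n r (K tau nu)) -> Cinf n r (u_fun n m h P K mu).
Proof.
  intros Hh HP HK k. unfold u_fun. apply Ck_sum. intros a Ha. apply Ck_sum. intros b Hb.
  apply (Ck_mult n r k (fun x => pd h a x * P a b x) (K b mu)); [|apply HK].
  apply (Ck_mult n r k (pd h a) (P a b)); [apply Cinf_pd; auto|apply HP].
Qed.

Lemma u_fun_critical n m h P K mu : (forall i, (i < n)%nat -> pd h i zero_pt = 0) ->
  u_fun n m h P K mu zero_pt = 0.
Proof.
  intros H. unfold u_fun. apply sum_to_zero. intros i Hi. apply sum_to_zero. intros j Hj.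
  rewrite H by auto. ring.
Qed.

(* At a critical point of [h] only the derivative falling on [dh] survives. *)
Lemma pd_u_fun_critical n m r h P K mu nu : (mu < n)%nat ->
  (forall i, (i < n)%nat -> 0 < r i) -> Cinf n r h -> (forall k tau, Cinf n r (P k tau)) ->
  (forall tau nu, Cinf n r (K tau nu)) -> (forall i, (i < n)%nat -> pd h i zero_pt = 0) ->
  pd (u_fun n m h P K nu) mu zero_pt = sum_to n (fun k => sum_to (n - m) (fun tau =>
    pd (pd h k) mu zero_pt * P k tau zero_pt * K tau nu zero_pt)).
Proof.
  intros Hmu Hr Hh HP HK Hcrit. apply pd_unique.
  pose proof (box_zero n r Hr) as Z.
  replace (sum_to n (fun k => sum_to (n - m) (fun tau =>
      pd (pd h k) mu zero_pt * P k tau zero_pt * K tau nu zero_pt))) with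
    (sum_to n (fun k => sum_to (n - m) (fun tau =>
      (pd (pd h k) mu zero_pt * P k tau zero_pt + pd h k zero_pt * pd (P k tau) mu zero_pt)
        * K tau nu zero_pt + pd h k zero_pt * P k tau zero_pt * pd (K tau nu) mu zero_pt))).
  - apply has_partial_sum. intros k Hk. apply has_partial_sum. intros tau Htau.
    apply has_partial_mult; [apply has_partial_mult|]; apply (Cinf_partials n r); auto.
    apply Cinf_pd; auto.
  - apply sum_to_ext. intros k Hk. apply sum_to_ext. intros tau Htau. rewrite Hcrit by auto. ring.
Qed.

Lemma solution_integrable n m r u hh : is_solution n m r u hh -> integrable_cond n m r u.
Proof.
  intros [Hs1 Hs2] x Hx mu nu Hmu Hnu. apply smooth_on_Cinf in Hs1.
  rewrite (pd_local n r (u nu) (pd hh nu) mu x), (pd_local n r (u mu) (pd hh mu) nu x);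
    auto; try lia; try (intros; symmetry; apply Hs2; auto).
  apply (pd_comm n r); auto; lia.
Qed.

Lemma least_eigenvalue_pos k A lam : posdef k A -> least_eigenvalue k A lam -> 0 < lam.
Proof.
  intros [_ HA] [[x [Hx Hex]] _].
  pose proof (HA x Hx) as Q. fold (quad k A x) in Q.
  rewrite (quad_eigenvector k A x lam Hex) in Q.
  pose proof (sqnorm_pos k x Hx). nra.
Qed.

Theorem mainTheorem8
  (n m : nat) (r : nat -> R) (h : point -> R) (P K : nat -> nat -> point -> R)
  (Hm1 : (1 <= m)%nat) (Hmn : (m < n)%nat)
  (Hr : forall i, (i < n)%nat -> 0 < r i)
  (Hh : smooth_on n (box n r) h)
  (HP : forall k tau, smooth_on n (box n r) (P k tau))
  (HK : forall tau mu, smooth_on n (box n r) (K tau mu))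
  (HKsym : forall x tau mu, box n r x -> K tau mu x = K mu tau x)
  (Hcrit : forall i, (i < n)%nat -> pd h i zero_pt = 0) :
  let u := u_fun n m h P K in
  let M := fun mu nu => pd (u nu) mu zero_pt in
  (* (i) *)
  ((exists hh, is_solution n m r u hh) <-> integrable_cond n m r u) /\
  (* (ii) *)
  (integrable_cond n m r u ->
     forall varpi, is_solution n m r u (hhat_formula n m u varpi)) /\
  (* formula for M *)
  (forall mu nu, (mu < n - m)%nat -> (nu < n - m)%nat ->
     M mu nu = sum_to n (fun k => sum_to (n - m) (fun tau =>
                 pd (pd h k) mu zero_pt * P k tau zero_pt * K tau nu zero_pt))) /\
  (* (iii) *)
  (integrable_cond n m r u ->
     ((exists hh, is_solution n m r u hh /\ critical_posdef n hh zero_pt)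
        <-> posdef (n - m) M) /\
     (posdef (n - m) M -> forall lam varpi, least_eigenvalue (n - m) M lam ->
        varpi > / lam * sum_to (n - m) (fun mu => sum_to m (fun a =>
                   (pd (u mu) (n - m + a)%nat zero_pt) ^ 2)) ->
        critical_posdef n (hhat_formula n m u varpi) zero_pt)).
Proof.
  intros u M.
  rewrite smooth_on_Cinf in Hh. setoid_rewrite smooth_on_Cinf in HP. setoid_rewrite smooth_on_Cinf in HK.
  assert (Hu : forall mu, Cinf n r (u mu)) by (intros; apply Cinf_u_fun; auto).
  assert (Hu0 : forall mu, u mu zero_pt = 0) by (intros; apply u_fun_critical; auto).
  split; [split; [intros [hh Hs]; apply solution_integrable with hh; auto
                 |intros Hic; exists (hhat_formula n m u 0); apply hhat_solves; auto]|].
  split; [intros; apply hhat_solves; auto|].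
  split; [intros; apply pd_u_fun_critical with r; auto; lia|].
  intros Hic. split; [split|].
  - intros [hh [Hsol [_ Hpd]]]. apply (posdef_leading_block (n - m) n (hessian hh zero_pt)); auto; [lia|].
    intros i j Hi Hj. apply (solution_hessian_low n m r u hh i j Hsol Hr); lia.
  - intros HM. destruct (posdef_coercive (n - m) M HM) as [c [Hc Hlow]].
    eexists. split; [apply hhat_solves; auto|]. apply (hhat_critical_posdef n m r u _ c); auto.
    apply Rlt_gt, Rlt_plus_1.
  - intros HM lam varpi Hlam Hv.
    apply (hhat_critical_posdef n m r u _ lam); auto; [eapply least_eigenvalue_pos; eauto|].
    apply least_eigenvalue_le_quad; [lia| |auto]. intros i j Hi Hj. apply Hic; auto. apply (box_zero n r); auto.
Qed.
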